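(* Let $\rho\in S_\infty$ be a permutation of $\omega$. Then the family $\mathcal{P}_\rho$ has the cofinal amalgamation property, and the set $\mathcal{C}_\rho$ contains a generic permutation $\gamma$. Furthermore, every generic permutation $\gamma$ of $\mathcal{C}_\rho$ satisfies: (i) $f_\rho(n)=f_\gamma(n)$ for all $n\in\omega\setminus\{0\}$; (ii) if the lengths of the finite cycles of $\rho$ are not bounded, then $\gamma$ has no infinite cycles; (iii) if the lengths of the finite cycles of $\rho$ are bounded and $\rho$ has an infinite cycle, then $\gamma$ has exactly one infinite cycle; and if $\rho$ has no infinite cycles, then neither does $\gamma$.
   Context: $S_\infty$ is the group of all permutations of $\omega$ with the topology of pointwise convergence. For a permutation $\rho$, the cycle function $f_\rho:(\omega\setminus\{0\})\cup\{\infty\}\to\omega\cup\{\infty\}$ assigns to each $n$ the number of cycles of $\rho$ of length $n$ (infinite cycles having length $\infty$). $\mathcal{C}_\rho$ is the topological closure in $S_\infty$ of the conjugacy class $\{\sigma\rho\sigma^{-1}:\sigma\in S_\infty\}$. $\mathcal{P}$ is the set of finite partial injections of $\omega$ (bijections between finite subsets of $\omega$), ordered by extension $\subseteq$ (inclusion of graphs), and $\mathcal{P}_\rho=\{p\in\mathcal{P}: p$ extends to some element of $\mathcal{C}_\rho\}$. For $\alpha\in S_\infty$ and $p\in\mathcal{P}$, $\alpha(p)$ is the partial map with graph $\{(\alpha(x),\alpha(y)):(x,y)\in\mathrm{Graph}(p)\}$. A family $\mathcal{P}'\subseteq\mathcal{P}$ has the cofinal amalgamation property if for every $p_0\in\mathcal{P}'$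 there is $p_0'\in\mathcal{P}'$ with $p_0\subseteq p_0'$ such that for all $p_1,p_2\in\mathcal{P}'$ with $p_0'\subseteq p_1$, $p_0'\subseteq p_2$ there exist $p_3\in\mathcal{P}'$ and $\alpha\in S_\infty$ fixing $\mathrm{Dom}(p_0')\cup\mathrm{Rng}(p_0')$ pointwise with $p_1\subseteq p_3$ and $\alpha(p_2)\subseteq p_3$. A permutation $\gamma$ is generic in $\mathcal{C}_\rho$ if its conjugacy class $\{\sigma\gamma\sigma^{-1}:\sigma\in S_\infty\}$ is comeagre in $\mathcal{C}_\rho$. *)

From mathcomp Require Import all_boot.
From Stdlib Require Import ClassicalEpsilon.

Set Implicit Arguments.
Unset Strict Implicit.
Unset Printing Implicit Defensive.

Definition is_perm (f : nat -> nat) : Prop := bijective f.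

Definition conj_class (rho : nat -> nat) (tau : nat -> nat) : Prop :=
  exists sigma sigma' : nat -> nat,
    cancel sigma sigma' /\ cancel sigma' sigma /\
    forall x, tau x = sigma (rho (sigma' x)).

(* Topology of pointwise convergence: basic neighbourhoods of tau are the sets
   of permutations agreeing with tau on {0,..,n-1}. *)
Definition agree_below (n : nat) (f g : nat -> nat) : Prop :=
  forall i, i < n -> f i = g i.

Definition C_rho (rho : nat -> nat) (tau : nat -> nat) : Prop :=
  is_perm tau /\
  forall n, exists tau', conj_class rho tau' /\ agree_below n tau' tau.

Definition nowhere_dense_in (X M : (nat -> nat) -> Prop) : Prop :=
  forall sigma n, X sigma ->
    exists sigma' m, X sigma' /\ agree_below n sigma' sigma /\
      forall tau, X tau -> agree_below m tau sigma' -> ~ M tau.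

Definition meagre_in (X A : (nat -> nat) -> Prop) : Prop :=
  exists Ms : nat -> (nat -> nat) -> Prop,
    (forall k, nowhere_dense_in X (Ms k)) /\
    forall tau, A tau -> exists k, Ms k tau.

Definition comeagre_in (X B : (nat -> nat) -> Prop) : Prop :=
  meagre_in X (fun tau => X tau /\ ~ B tau).

Definition generic (rho gamma : nat -> nat) : Prop :=
  C_rho rho gamma /\ comeagre_in (C_rho rho) (conj_class gamma).

(* A finite partial injection, represented by its graph (a list of pairs),
   functional and injective. *)
Definition pdom (p : seq (nat * nat)) : seq nat := unzip1 p.
Definition prng (p : seq (nat * nat)) : seq nat := unzip2 p.

Definition is_pinj (p : seq (nat * nat)) : Prop :=
  uniq (pdom p) /\ uniq (prng p).

Definition pext (p q : seq (nat * nat)) : Prop :=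
  forall xy, xy \in p -> xy \in q.

Definition pimg (alpha : nat -> nat) (p : seq (nat * nat)) : seq (nat * nat) :=
  map (fun xy => (alpha xy.1, alpha xy.2)) p.

Definition P_rho (rho : nat -> nat) (p : seq (nat * nat)) : Prop :=
  is_pinj p /\
  exists tau, C_rho rho tau /\ forall xy, xy \in p -> tau xy.1 = xy.2.

Definition cofinal_amalgamation (P' : seq (nat * nat) -> Prop) : Prop :=
  forall p0, P' p0 ->
    exists p0', P' p0' /\ pext p0 p0' /\
      forall p1 p2, P' p1 -> P' p2 -> pext p0' p1 -> pext p0' p2 ->
        exists p3 alpha, P' p3 /\ is_perm alpha /\
          (forall x, x \in pdom p0' ++ prng p0' -> alpha x = x) /\
          pext p1 p3 /\ pext (pimg alpha p2) p3.

Definition same_cycle (rho : nat -> nat) (x y : nat) : Prop :=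
  exists k, iter k rho x = y \/ iter k rho y = x.

(* the cycle of x has length n (Some n, n >= 1) or is infinite (None) *)
Definition cycle_len (rho : nat -> nat) (x : nat) (n : option nat) : Prop :=
  match n with
  | Some n => 0 < n /\ iter n rho x = x /\
              forall k, 0 < k -> k < n -> iter k rho x <> x
  | None => forall k, 0 < k -> iter k rho x <> x
  end.

Definition count_cycles (rho : nat -> nat) (n : option nat) (k : nat) : Prop :=
  exists s : seq nat, size s = k /\
    (forall i j, i < k -> j < k ->
       same_cycle rho (nth 0 s i) (nth 0 s j) -> i = j) /\
    (forall x, x \in s -> cycle_len rho x n) /\
    (forall x, cycle_len rho x n -> exists2 y, y \in s & same_cycle rho y x).

(* f_rho : (omega \ {0}) u {infty} -> omega u {infty}; here infty is encoded
   by None on both sides. *)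
Definition cycle_fun (rho : nat -> nat) (n : option nat) : option nat :=
  match excluded_middle_informative (exists k, count_cycles rho n k) with
  | left H => Some (proj1_sig (constructive_indefinite_description _ H))
  | right _ => None
  end.

Definition finite_cycles_bounded (rho : nat -> nat) : Prop :=
  exists B, forall x n, cycle_len rho x (Some n) -> n <= B.

From mathcomp Require Import all_boot zify.
From Stdlib Require Import ClassicalEpsilon Classical.

Lemma iterC (f : nat -> nat) n m x : iter n f (iter m f x) = iter m f (iter n f x).
Proof. by rewrite -!iterD addnC. Qed.

Lemma inj_iter {f : nat -> nat} n : injective f -> injective (iter n f).
Proof. by move=> f_inj; elim: n => [//|n IHn] x y /= /f_inj /IHn. Qed.

Lemma can_iter {f g : nat -> nat} n : cancel f g -> cancel (iter n f) (iter n g).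
Proof. by move=> fK; elim: n => [//|n IHn] x; rewrite iterSr iterS fK IHn. Qed.

Lemma iter_morph {c f g : nat -> nat} : (forall x, c (f x) = g (c x)) ->
  forall n x, c (iter n f x) = iter n g (c x).
Proof. by move=> cfg; elim=> [//|n IHn] x /=; rewrite cfg IHn. Qed.

Lemma iter_conj {s s' t t' : nat -> nat} n x : cancel s s' -> cancel s' s ->
  (forall x, t' x = s (t (s' x))) -> iter n t' x = s (iter n t (s' x)).
Proof.
move=> sK s'K tt'; rewrite -{1}(s'K x); symmetry; apply: iter_morph => y.
by rewrite tt' sK.
Qed.

Lemma iter_modn {f : nat -> nat} {n x} k : iter n f x = x -> iter k f x = iter (k %% n) f x.
Proof.
move=> fx; have fqx q : iter (q * n) f x = x by elim: q => [//|q IHq]; rewrite mulSn iterD IHq fx.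
by rewrite {1}(divn_eq k n) addnC iterD fqx.
Qed.

Section InjectiveIterates.

Context {f : nat -> nat} (f_inj : injective f).

Lemma iter_subn_fixed {x a b} : iter a f x = iter b f x -> a < b -> iter (b - a) f x = x.
Proof. by move=> fab ab; apply: (inj_iter a f_inj); rewrite -iterD subnKC ?(ltnW ab). Qed.

Lemma cycle_len_finP {x n} i j : cycle_len f x (Some n) ->
  iter i f x = iter j f x <-> i = j %[mod n].
Proof.
move=> [n_gt0 [fnx minn]]; rewrite (iter_modn i fnx) (iter_modn j fnx).
split; last by move->.
wlog ij : i j / i %% n <= j %% n => [hwlog|fij].
  by case: (leqP (i %% n) (j %% n)) => [/hwlog//|/ltnW ji /esym /hwlog ->].
apply/eqP; rewrite eqn_leq ij leqNgt; apply/negP => ltij.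
have := minn _ _ _ (iter_subn_fixed fij ltij); rewrite subn_gt0 ltij; apply=> //.
by rewrite ltn_subLR ?(ltnW ltij) // ltn_addl // ltn_pmod.
Qed.

Lemma cycle_len_infP {x} i j : cycle_len f x None -> iter i f x = iter j f x <-> i = j.
Proof.
move=> inf; split=> [|->//].
wlog ij : i j / i <= j => [hwlog|fij].
  by case: (leqP i j) => [/hwlog//|/ltnW ji /esym /hwlog ->].
apply/eqP; rewrite eqn_leq ij leqNgt; apply/negP => ltij.
by apply: (inf (j - i)); rewrite ?subn_gt0 // iter_subn_fixed.
Qed.

End InjectiveIterates.

Lemma cycle_len_iterP {f f' : nat -> nat} {x x' l} i j : injective f -> injective f' ->
  cycle_len f x l -> cycle_len f' x' l ->
  iter i f x = iter j f x <-> iter i f' x' = iter j f' x'.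
Proof.
case: l => [n|] f_inj f'_inj cx cx'.
  by rewrite (cycle_len_finP f_inj i j cx) (cycle_len_finP f'_inj i j cx').
by rewrite (cycle_len_infP f_inj i j cx) (cycle_len_infP f'_inj i j cx').
Qed.

Lemma cycle_len_uniq {f : nat -> nat} {x l l'} :
  cycle_len f x l -> cycle_len f x l' -> l = l'.
Proof.
case: l => [n|]; case: l' => [n'|] //=.
- move=> [n0 [fn minn]] [n0' [fn' minn']].
  by case: (ltngtP n n') => [lt|lt|->//]; [case: (minn' n) | case: (minn n')].
- by move=> [n0 [fn _]] inf; case: (inf n).
- by move=> inf [n0 [fn _]]; case: (inf _ n0).
Qed.

Lemma cycle_len_exists (f : nat -> nat) x : exists l, cycle_len f x l.
Proof.
case: (classic (exists n, 0 < n /\ iter n f x = x)) => [fin|inf]; last first.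
  by exists None => k k_gt0 fk; apply: inf; exists k.
have fin' : exists n, (0 < n) && (iter n f x == x).
  by case: fin => n [n_gt0 fn]; exists n; rewrite n_gt0 fn eqxx.
case: (ex_minnP fin') => n /andP[n_gt0 /eqP fn] minn.
exists (Some n); do 2!split=> //; move=> k k_gt0 kn fk.
by have := minn k; rewrite k_gt0 fk eqxx leqNgt kn => /(_ isT).
Qed.

Lemma same_cycle_refl (f : nat -> nat) x : same_cycle f x x.
Proof. by exists 0; left. Qed.

Lemma same_cycle_sym {f : nat -> nat} {x y} : same_cycle f x y -> same_cycle f y x.
Proof. by case=> k [fk|fk]; exists k; [right|left]. Qed.

Lemma same_cycle_iter (f : nat -> nat) x k : same_cycle f x (iter k f x).
Proof. by exists k; left. Qed.

Section SameCycle.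

Context {f : nat -> nat} (f_inj : injective f).

Lemma same_cycle_trans {x y z} : same_cycle f x y -> same_cycle f y z -> same_cycle f x z.
Proof.
move=> [a [fa|fa]] [b [fb|fb]].
- by exists (b + a); left; rewrite iterD fa.
- case: (leqP a b) => ab.
    by exists (b - a); right; apply: (inj_iter a f_inj); rewrite -iterD subnKC // fa fb.
  by exists (a - b); left; apply: (inj_iter b f_inj); rewrite -iterD subnKC ?(ltnW ab) // fa fb.
- case: (leqP a b) => ab.
    by exists (b - a); left; rewrite -fa -iterD subnK.
  by exists (a - b); right; rewrite -fb -iterD subnK ?(ltnW ab).
- by exists (a + b); right; rewrite iterD fb.
Qed.

Lemma same_cycle_trans_sym {x y z} : same_cycle f x y -> same_cycle f x z -> same_cycle f y z.
Proof. by move/same_cycle_sym; apply: same_cycle_trans. Qed.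

Lemma same_cycle_fixed {x y} j : same_cycle f x y -> iter j f x = x <-> iter j f y = y.
Proof.
move=> [k [fk|fk]]; subst; rewrite iterC.
  by split=> [->//|/(inj_iter k f_inj)].
by split=> [/(inj_iter k f_inj)|->].
Qed.

Lemma same_cycle_cycle_len {x y l} : same_cycle f x y -> cycle_len f x l -> cycle_len f y l.
Proof.
move=> xy; case: l => [n|] /=.
  move=> [n_gt0 [fn minn]]; do 2!split=> //; first by rewrite -(same_cycle_fixed _ xy).
  by move=> k k_gt0 kn; rewrite -(same_cycle_fixed _ xy); apply: minn.
by move=> inf k k_gt0; rewrite -(same_cycle_fixed _ xy); apply: inf.
Qed.

Lemma same_cycle_finP {x y n} : cycle_len f x (Some n) -> same_cycle f x y ->
  exists2 j, j < n & iter j f x = y.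
Proof.
move=> [n_gt0 [fn _]] [k [fk|fk]].
  by exists (k %% n); rewrite ?ltn_pmod // -(iter_modn _ fn).
subst x; exists ((n - k %% n) %% n); first by rewrite ltn_pmod.
have fny : iter n f y = y by apply/(same_cycle_fixed n (same_cycle_iter f y k)).
rewrite -(iter_modn _ fn) -iterD (iter_modn _ fny) -modnDmr subnK ?modnn //.
by rewrite ltnW // ltn_pmod.
Qed.

Lemma cycle_len_not_forward {x y} : same_cycle f x y -> ~ (exists k, iter k f x = y) ->
  cycle_len f x None.
Proof.
move=> xy not_fwd; have [[n|] cx] := cycle_len_exists f x => //.
by have [j _ fj] := same_cycle_finP cx xy; case: not_fwd; exists j.
Qed.

End SameCycle.

Definition pbool (P : Prop) : bool := if excluded_middle_informative P then true else false.

Lemma pboolP (P : Prop) : reflect P (pbool P).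
Proof. by rewrite /pbool; case: excluded_middle_informative => H; constructor. Qed.

Lemma pboolT {P : Prop} : P -> pbool P.
Proof. by move/pboolP. Qed.

Lemma eq_pbool (P Q : Prop) : (P <-> Q) -> pbool P = pbool Q.
Proof. by move=> PQ; apply/pboolP/pboolP; rewrite PQ. Qed.

Definition cycles_ge (t : nat -> nat) (l : option nat) (k : nat) : Prop :=
  exists s : seq nat, [/\ size s = k, uniq s, forall x, x \in s -> cycle_len t x l &
    forall x y, x \in s -> y \in s -> same_cycle t x y -> x = y].

Lemma cycles_ge0 t l : cycles_ge t l 0.
Proof. by exists [::]. Qed.

Lemma cycles_geW t l k j : j <= k -> cycles_ge t l k -> cycles_ge t l j.
Proof.
move=> jk [s [sz s_uniq s_len s_sep]]; exists (take j s); split.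
- by rewrite size_takel // sz.
- by rewrite take_uniq.
- by move=> x /mem_take; apply: s_len.
- by move=> x y /mem_take xs /mem_take ys; apply: s_sep.
Qed.

Lemma cycles_ge1P t l : cycles_ge t l 1 <-> exists x, cycle_len t x l.
Proof.
split=> [[[|x s] [//= _ _ s_len _]]|[x cx]]; first by exists x; apply: s_len; rewrite mem_head.
by exists [:: x]; split=> // [y|y z]; rewrite !inE => /eqP-> // /eqP->.
Qed.

Section CycleCount.

Context {t : nat -> nat} (t_inj : injective t).

Lemma count_cyclesE l k : count_cycles t l k <-> cycles_ge t l k /\ ~ cycles_ge t l k.+1.
Proof.
split.
- move=> [s [sz [s_sep [s_len s_cover]]]].
  have s_sep' x y : x \in s -> y \in s -> same_cycle t x y -> x = y.
    move=> xs ys xy; rewrite -(nth_index 0 xs) -(nth_index 0 ys).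
    by congr nth; apply: s_sep; rewrite -?sz ?index_mem ?nth_index.
  have s_uniq : uniq s.
    apply/(uniqP 0) => i j; rewrite !inE => i_lt j_lt eq_ij.
    by apply: s_sep; rewrite -?sz // eq_ij; apply: same_cycle_refl.
  split; first by exists s.
  move=> [r [rsz r_uniq r_len r_sep]].
  pose rep x := epsilon (inhabits 0) (fun y => y \in s /\ same_cycle t y x).
  have repP x : x \in r -> rep x \in s /\ same_cycle t (rep x) x.
    move=> xr; apply: (epsilon_spec (inhabits 0) (fun y => y \in s /\ same_cycle t y x)).
    by case: (s_cover x (r_len x xr)) => y ys yx; exists y.
  have rep_uniq : uniq (map rep r).
    rewrite map_inj_in_uniq // => x y xr yr rep_xy; apply: r_sep => //.
    by apply: (same_cycle_trans_sym t_inj (repP x xr).2); rewrite rep_xy; apply: (repP y yr).2.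
  have rep_sub : {subset map rep r <= s} by move=> _ /mapP[x xr ->]; apply: (repP x xr).1.
  by have := uniq_leq_size rep_uniq rep_sub; rewrite size_map rsz sz ltnn.
- move=> [[s [sz s_uniq s_len s_sep]] not_more]; exists s; split=> //; split.
    move=> i j i_lt j_lt ij; rewrite -sz in i_lt j_lt.
    by apply/eqP; rewrite -(nth_uniq 0 i_lt j_lt s_uniq); apply/eqP/s_sep; rewrite ?mem_nth.
  split=> // x cx; apply: NNPP => uncovered; apply: not_more.
  have xs : x \notin s.
    by apply/negP => xs; apply: uncovered; exists x => //; apply: same_cycle_refl.
  exists (x :: s); split; first by rewrite /= sz.
  + by rewrite /= xs s_uniq.
  + by move=> y; rewrite inE => /orP[/eqP->|/s_len].
  + move=> y z; rewrite !inE => /orP[/eqP->|ys] /orP[/eqP->|zs] // yz.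
    * by case: uncovered; exists z => //; apply: same_cycle_sym.
    * by case: uncovered; exists y.
    * exact: s_sep.
Qed.

Lemma count_cycles_uniq {l k k'} : count_cycles t l k -> count_cycles t l k' -> k = k'.
Proof.
move=> /count_cyclesE[ge_k not_k1] /count_cyclesE[ge_k' not_k'1].
by case: (ltngtP k k') => // [/cycles_geW/(_ ge_k')|/cycles_geW/(_ ge_k)].
Qed.

Lemma cycle_fun_count {l k} : count_cycles t l k -> cycle_fun t l = Some k.
Proof.
move=> ck; rewrite /cycle_fun; case: excluded_middle_informative => [ex|]; last first.
  by case; exists k.
by case: constructive_indefinite_description => k' /= ck'; rewrite (count_cycles_uniq ck' ck).
Qed.

Lemma cycle_fun_exact {l k} : cycles_ge t l k -> ~ cycles_ge t l k.+1 -> cycle_fun t l = Some k.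
Proof. by move=> ge_k not_k1; apply: cycle_fun_count; apply/count_cyclesE. Qed.

Lemma cycle_fun_infinite l : (forall k, cycles_ge t l k) -> cycle_fun t l = None.
Proof.
move=> all_k; rewrite /cycle_fun; case: excluded_middle_informative => [[k ck]|//].
by have [_ []] := (count_cyclesE l k).1 ck.
Qed.

End CycleCount.

Lemma count_cycles_fun t l k : cycle_fun t l = Some k -> count_cycles t l k.
Proof.
rewrite /cycle_fun; case: excluded_middle_informative => // ex.
by case: constructive_indefinite_description => k' /= ck' [<-].
Qed.

Lemma cycles_ge_exact {t l} : (exists k, ~ cycles_ge t l k) ->
  exists k, cycles_ge t l k /\ ~ cycles_ge t l k.+1.
Proof.
move=> ex; have ex' : exists k, ~~ pbool (cycles_ge t l k).
  by case: ex => k not_k; exists k; apply/negP => /pboolP.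
case: (ex_minnP ex') => [[|k]] /negP not_k min_k.
  by case: not_k; apply/pboolP/cycles_ge0.
exists k; split; last by move=> ge_k1; apply: not_k; apply/pboolP.
apply: NNPP => not_k'; suff: k < k by rewrite ltnn.
by apply: min_k; apply/negP => /pboolP.
Qed.

Lemma eq_cycle_fun t t' l : injective t -> injective t' ->
  (forall k, cycles_ge t l k <-> cycles_ge t' l k) -> cycle_fun t l = cycle_fun t' l.
Proof.
move=> t_inj t'_inj tt'.
case: (classic (forall k, cycles_ge t l k)) => [all_k|/not_all_ex_not ex].
  by rewrite !cycle_fun_infinite // => k; rewrite -tt'.
have [k [ge_k not_k1]] := cycles_ge_exact ex.
rewrite (cycle_fun_exact t_inj ge_k not_k1) (cycle_fun_exact t'_inj (k := k)) //.
  exact/tt'.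
by rewrite -tt'.
Qed.

Section Conjugation.

Context {s s' t t' : nat -> nat} (sK : cancel s s') (s'K : cancel s' s)
  (tt' : forall x, t' x = s (t (s' x))).

Lemma iter_conjE k x y : iter k t' x = y <-> iter k t (s' x) = s' y.
Proof. by rewrite (iter_conj _ _ sK s'K tt'); split=> [<-|->]; rewrite ?sK ?s'K. Qed.

Lemma cycle_len_conj x l : cycle_len t' x l <-> cycle_len t (s' x) l.
Proof.
case: l => [n|] /=; split.
- by move=> [n_gt0 [fn minn]]; do 2!split=> //; [apply/iter_conjE | move=> k ? ? /iter_conjE; apply: minn].
- by move=> [n_gt0 [fn minn]]; do 2!split=> //; [apply/iter_conjE | move=> k ? ? /iter_conjE; apply: minn].
- by move=> inf k k_gt0 /iter_conjE; apply: inf.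
- by move=> inf k k_gt0 /iter_conjE; apply: inf.
Qed.

Lemma same_cycle_conj x y : same_cycle t' x y <-> same_cycle t (s' x) (s' y).
Proof. by split=> [] [k [fk|fk]]; exists k; [left|right|left|right]; apply/iter_conjE. Qed.

End Conjugation.

Lemma conj_class_refl t : conj_class t t.
Proof. by exists id, id. Qed.

Lemma conj_class_sym {t t'} : conj_class t t' -> conj_class t' t.
Proof. by move=> [s [s' [sK [s'K tt']]]]; exists s', s; do 2!split=> //; move=> x; rewrite tt' !sK. Qed.

Lemma conj_class_trans {t1 t2 t3} : conj_class t1 t2 -> conj_class t2 t3 -> conj_class t1 t3.
Proof.
move=> [s [s' [sK [s'K t12]]]] [u [u' [uK [u'K t23]]]].
exists (fun x => u (s x)), (fun x => s' (u' x)).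
by split; [|split]; move=> x /=; rewrite ?uK ?sK ?s'K ?u'K ?t23 ?t12.
Qed.

Lemma is_perm_conj {t t'} : is_perm t -> conj_class t t' -> is_perm t'.
Proof.
move=> [ti tK tiK] [s [s' [sK [s'K tt']]]].
by exists (fun x => s (ti (s' x))) => x; rewrite ?tt' sK ?tK ?tiK s'K.
Qed.

Lemma cycles_ge_conj {t t' l k} : conj_class t t' -> cycles_ge t' l k <-> cycles_ge t l k.
Proof.
move=> [s [s' [sK [s'K tt']]]]; have s_inj := can_inj sK; have s'_inj := can_inj s'K.
split=> [] [r [rsz r_uniq r_len r_sep]].
- exists (map s' r); split; rewrite ?size_map ?map_inj_uniq //.
    by move=> _ /mapP[x xr ->]; apply/(cycle_len_conj sK s'K tt'); apply: r_len.
  move=> _ _ /mapP[x xr ->] /mapP[y yr ->] xy; congr s'.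
  by apply: r_sep => //; apply/(same_cycle_conj sK s'K tt').
- exists (map s r); split; rewrite ?size_map ?map_inj_uniq //.
    by move=> _ /mapP[x xr ->]; apply/(cycle_len_conj sK s'K tt'); rewrite sK; apply: r_len.
  move=> _ _ /mapP[x xr ->] /mapP[y yr ->] /(same_cycle_conj sK s'K tt'); rewrite !sK => xy.
  by congr s; apply: r_sep.
Qed.

Lemma finite_cycles_bounded_conj {t t'} :
  conj_class t t' -> finite_cycles_bounded t' -> finite_cycles_bounded t.
Proof.
move=> [s [s' [sK [s'K tt']]]] [B bounded]; exists B => y n cy; apply: (bounded (s y)).
by apply/(cycle_len_conj sK s'K tt'); rewrite sK.
Qed.

(** * Permutations with the same cycle counts are conjugate *)

Definition card_ge (P : nat -> Prop) k :=
  exists s : seq nat, [/\ size s = k, uniq s & forall x, x \in s -> P x].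

Definition rank (P : nat -> Prop) x := count (fun z => pbool (P z)) (iota 0 x).

Lemma rank_lt {P : nat -> Prop} {x y} : P x -> x < y -> rank P x < rank P y.
Proof.
move=> Px xy; rewrite /rank -(subnKC (ltnW xy)) iotaD count_cat add0n.
rewrite -[X in X < _]addn0 ltn_add2l -has_count; apply/hasP; exists x; last exact/pboolP.
by rewrite mem_iota leqnn subnKC ?(ltnW xy).
Qed.

Lemma rank_inj {P : nat -> Prop} {x y} : P x -> P y -> rank P x = rank P y -> x = y.
Proof.
move=> Px Py rxy; case: (ltngtP x y) => // [/(rank_lt Px)|/(rank_lt Py)].
  by rewrite rxy ltnn.
by rewrite rxy ltnn.
Qed.

Lemma card_ge_rank (P : nat -> Prop) x : P x -> card_ge P (rank P x).+1.
Proof.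
move=> Px; exists (rcons [seq z <- iota 0 x | pbool (P z)] x); split.
- by rewrite size_rcons size_filter.
- by rewrite rcons_uniq filter_uniq ?iota_uniq // mem_filter mem_iota ltnn !andbF.
- by move=> z; rewrite mem_rcons inE => /orP[/eqP->//|]; rewrite mem_filter => /andP[/pboolP].
Qed.

Lemma mem_leq_foldr_max (s : seq nat) x : x \in s -> x <= foldr maxn 0 s.
Proof.
elim: s => [//|a s IHs]; rewrite inE /= => /orP[/eqP->|/IHs xs]; first exact: leq_maxl.
by rewrite (leq_trans xs) // leq_maxr.
Qed.

Lemma rank_surj (P : nat -> Prop) r : card_ge P r.+1 -> exists y, P y /\ rank P y = r.
Proof.
move=> [s [sz s_uniq sP]].
have ex : exists n, r < rank P n.
  exists (foldr maxn 0 s).+1; rewrite -sz /rank -size_filter; apply: uniq_leq_size => // x xs.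
  by rewrite mem_filter mem_iota /= add0n ltnS mem_leq_foldr_max // andbT; apply/pboolP; apply: sP.
case: (ex_minnP ex) => -[|n]; first by rewrite /rank.
move=> rn min_n; have rn' : rank P n <= r by rewrite leqNgt; apply/negP => /min_n; rewrite ltnn.
have iotaS : iota 0 n.+1 = iota 0 n ++ [:: n] by rewrite -addn1 iotaD.
move: rn rn'; rewrite /rank iotaS count_cat /= addn0.
by case: (pboolP (P n)) => Pn /= *; [exists n; split => //; rewrite /rank; lia | lia].
Qed.

(* The increasing bijection between two sets of naturals of the same cardinality. *)
Definition rank_match (P P' : nat -> Prop) x :=
  epsilon (inhabits 0) (fun y => P' y /\ rank P' y = rank P x).

Lemma rank_matchP {P P' : nat -> Prop} {x} : (forall k, card_ge P k <-> card_ge P' k) ->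
  P x -> P' (rank_match P P' x) /\ rank P' (rank_match P P' x) = rank P x.
Proof.
move=> PP' Px; apply: (epsilon_spec (inhabits 0) (fun y => P' y /\ rank P' y = rank P x)).
by apply/rank_surj/PP'/card_ge_rank.
Qed.

Lemma rank_matchK {P P' : nat -> Prop} {x} : (forall k, card_ge P k <-> card_ge P' k) ->
  P x -> rank_match P' P (rank_match P P' x) = x.
Proof.
move=> PP' Px; have [P'y ry] := rank_matchP PP' Px.
have [Pz rz] := rank_matchP (fun k => iff_sym (PP' k)) P'y.
by apply: (rank_inj Pz Px); rewrite rz ry.
Qed.

Definition cycle_separated (t : nat -> nat) (us : seq nat) :=
  forall i j, i < size us -> j < size us -> same_cycle t (nth 0 us i) (nth 0 us j) -> i = j.

Definition marked_cycles (t : nat -> nat) (us : seq nat) (ls : seq (option nat)) :=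
  [/\ size us = size ls,
      forall i, i < size us -> cycle_len t (nth 0 us i) (nth None ls i) &
      cycle_separated t us].

Definition mark_index (t : nat -> nat) (us : seq nat) x := find (fun u => pbool (same_cycle t u x)) us.

Lemma cycle_min_subproof (t : nat -> nat) x : exists y, pbool (same_cycle t x y).
Proof. by exists x; apply/pboolP/same_cycle_refl. Qed.

Definition cycle_min (t : nat -> nat) x := ex_minn (cycle_min_subproof t x).

Definition cycle_base (t : nat -> nat) (us : seq nat) x :=
  if mark_index t us x < size us then nth 0 us (mark_index t us x) else cycle_min t x.

Section CycleBase.

Context {t : nat -> nat} (t_inj : injective t) (us : seq nat).

Lemma mark_index_same_cycle {x y} : same_cycle t x y -> mark_index t us x = mark_index t us y.
Proof.
move=> xy; apply: eq_find => u; apply: eq_pbool.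
by split=> [/same_cycle_trans|/same_cycle_trans]; apply=> //; apply: same_cycle_sym.
Qed.

Lemma cycle_min_same_cycle {x y} : same_cycle t x y -> cycle_min t x = cycle_min t y.
Proof.
move=> xy; apply: eq_ex_minn => z; apply: eq_pbool.
by split; apply: same_cycle_trans_sym => //; apply: same_cycle_sym.
Qed.

Lemma same_cycle_base x : same_cycle t x (cycle_base t us x).
Proof.
rewrite /cycle_base; case: ifP => [|_]; last by rewrite /cycle_min; case: ex_minnP => y /pboolP.
by rewrite -has_find => /(nth_find 0) /pboolP /same_cycle_sym.
Qed.

Lemma cycle_base_same_cycle {x y} : same_cycle t x y -> cycle_base t us x = cycle_base t us y.
Proof.
by move=> xy; rewrite /cycle_base (mark_index_same_cycle xy) (cycle_min_same_cycle xy).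
Qed.

Lemma cycle_base_id x : cycle_base t us (cycle_base t us x) = cycle_base t us x.
Proof. by symmetry; apply/cycle_base_same_cycle/same_cycle_base. Qed.

Lemma same_cycle_mark {x} : mark_index t us x < size us ->
  same_cycle t (nth 0 us (mark_index t us x)) x.
Proof. by rewrite -has_find => /(nth_find 0) /pboolP. Qed.

Lemma not_same_cycle_mark x i : size us <= mark_index t us x -> i < size us ->
  ~ same_cycle t (nth 0 us i) x.
Proof.
move=> unmarked i_lt ix; suff: has (fun u => pbool (same_cycle t u x)) us.
  by rewrite has_find ltnNge unmarked.
by apply/hasP; exists (nth 0 us i); [apply: mem_nth | apply/pboolP].
Qed.

Hypothesis us_sep : cycle_separated t us.

Lemma mark_index_nth i : i < size us -> mark_index t us (nth 0 us i) = i.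
Proof.
move=> i_lt; have marked : has (fun u => pbool (same_cycle t u (nth 0 us i))) us.
  by apply/hasP; exists (nth 0 us i); [apply: mem_nth | apply/pboolP/same_cycle_refl].
by apply: us_sep; rewrite -?has_find //; apply/pboolP/(nth_find 0 marked).
Qed.

Lemma cycle_base_nth i : i < size us -> cycle_base t us (nth 0 us i) = nth 0 us i.
Proof. by move=> i_lt; rewrite /cycle_base mark_index_nth ?i_lt. Qed.

End CycleBase.

(* Send the forward and backward orbit of each base point [b = bs x] under [t] along the
   orbit of [h b] under [t'] ([t'i] is the inverse of [t']). *)
Definition cycle_map (t t' t'i bs h : nat -> nat) x :=
  let b := bs x in
  if pbool (exists k, iter k t b = x)
  then iter (epsilon (inhabits 0) (fun k => iter k t b = x)) t' (h b)
  else iter (epsilon (inhabits 0) (fun k => iter k t x = b)) t'i (h b).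

Section CycleMapOrbit.

Context {t t' t'i bs h : nat -> nat} (t_inj : injective t).

Lemma cycle_map_fwd {x b l} k : injective t' -> bs x = b -> cycle_len t b l ->
  cycle_len t' (h b) l -> iter k t b = x -> cycle_map t t' t'i bs h x = iter k t' (h b).
Proof.
move=> t'_inj bxb cb chb fk; rewrite /cycle_map bxb.
case: pboolP => [_|]; last by case; exists k.
have := epsilon_spec (inhabits 0) (fun k => iter k t b = x) (ex_intro _ k fk).
by move=> fe; apply/(cycle_len_iterP _ k t_inj t'_inj cb chb); rewrite fe fk.
Qed.

Lemma cycle_map_bwd {x b} k : bs x = b -> same_cycle t b x -> ~ (exists k, iter k t b = x) ->
  iter k t x = b -> cycle_map t t' t'i bs h x = iter k t'i (h b).
Proof.
move=> bxb bx not_fwd fk; rewrite /cycle_map bxb; case: pboolP => // _.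
have := epsilon_spec (inhabits 0) (fun k => iter k t x = b) (ex_intro _ k fk).
set e := epsilon _ _ => fe.
have cx := same_cycle_cycle_len t_inj bx (cycle_len_not_forward t_inj bx not_fwd).
by have /(cycle_len_infP t_inj e k cx) -> : iter e t x = iter k t x by rewrite fe fk.
Qed.

End CycleMapOrbit.

Section CycleMap.

Context {t ti t' t'i bs h : nat -> nat}.
Context (tK : cancel t ti) (t'K : cancel t' t'i) (t'iK : cancel t'i t').
Context (bs_same : forall x, same_cycle t x (bs x)).
Context (bs_eq : forall x y, same_cycle t x y -> bs x = bs y).
Context (h_len : forall x l, cycle_len t (bs x) l -> cycle_len t' (h (bs x)) l).

Let t_inj := can_inj tK.
Let t'_inj := can_inj t'K.

Lemma cycle_map_morph x : cycle_map t t' t'i bs h (t x) = t' (cycle_map t t' t'i bs h x).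
Proof.
have bt : bs (t x) = bs x by symmetry; apply/bs_eq/(same_cycle_iter t x 1).
set b := bs x in bt *; have [l cb] := cycle_len_exists t b; have chb := h_len x l cb.
have bx : same_cycle t b x := same_cycle_sym (bs_same x).
case: (classic (exists k, iter k t b = x)) => [[k fk]|not_fwd].
  rewrite (cycle_map_fwd (bs := bs) t_inj k t'_inj (erefl _) cb chb fk).
  by rewrite (cycle_map_fwd t_inj k.+1 t'_inj bt cb chb) // iterS fk.
have [k fk] : exists k, iter k t x = b.
  by case: bx => k [fk|fk]; [case: not_fwd; exists k | exists k].
rewrite (cycle_map_bwd (bs := bs) t_inj k (erefl _) bx not_fwd fk).
have cx := same_cycle_cycle_len t_inj bx (cycle_len_not_forward t_inj bx not_fwd).
case: k fk => [|[|k]] fk; first by case: not_fwd; exists 0.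
  by rewrite (cycle_map_fwd t_inj 0 t'_inj bt cb chb) //= t'iK.
have not_fwd' : ~ (exists j, iter j t b = t x).
  by move=> [j]; rewrite -fk -iterD -[t x]/(iter 1 t x) => /(cycle_len_infP t_inj _ _ cx); lia.
rewrite (cycle_map_bwd t_inj k.+1 bt _ not_fwd') ?[in RHS]iterS ?t'iK -?iterSr //.
exact: (same_cycle_trans t_inj bx (same_cycle_iter t x 1)).
Qed.

Context {bs' h' : nat -> nat}.
Context (bs'_eq : forall x y, same_cycle t' x y -> bs' x = bs' y).
Context (h_base : forall x, bs' (h (bs x)) = h (bs x)) (hK : forall x, h' (h (bs x)) = bs x).

Lemma cycle_mapK : cancel (cycle_map t t' t'i bs h) (cycle_map t' t ti bs' h').
Proof.
move=> x; set b := bs x; set b' := h b.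
have [l cb] := cycle_len_exists t b; have cb' : cycle_len t' b' l := h_len x l cb.
have bx : same_cycle t b x := same_cycle_sym (bs_same x).
have bb' : bs' b' = b' := h_base x.
case: (classic (exists k, iter k t b = x)) => [[k fk]|not_fwd].
  rewrite (cycle_map_fwd (bs := bs) t_inj k t'_inj (erefl _) cb cb' fk).
  have bsk : bs' (iter k t' b') = b'.
    by rewrite -{2}bb'; apply/bs'_eq/same_cycle_sym/same_cycle_iter.
  by rewrite (cycle_map_fwd t'_inj k t_inj bsk cb') ?hK.
have [k fk] : exists k, iter k t x = b.
  by case: bx => k [fk|fk]; [case: not_fwd; exists k | exists k].
rewrite (cycle_map_bwd (bs := bs) t_inj k (erefl _) bx not_fwd fk).
have /(cycle_len_uniq cb) El := cycle_len_not_forward t_inj bx not_fwd; subst l.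
have fkb' : iter k t' (iter k t'i b') = b' by apply: can_iter.
have b'_same : same_cycle t' b' (iter k t'i b') by exists k; right.
have bsk : bs' (iter k t'i b') = b' by rewrite -{2}bb'; apply/bs'_eq/same_cycle_sym.
have not_fwd' : ~ (exists j, iter j t' b' = iter k t'i b').
  move=> [j fj]; have : iter (k + j) t' b' = iter 0 t' b' by rewrite iterD fj fkb'.
  move/(cycle_len_infP t'_inj _ _ cb') => /eqP; rewrite addn_eq0 => /andP[/eqP k0 _].
  by case: not_fwd; exists 0; rewrite -fk k0.
by rewrite (cycle_map_bwd t'_inj k bsk b'_same not_fwd' fkb') hK -/b -fk can_iter.
Qed.

End CycleMap.

Definition cycle_length (t : nat -> nat) x := epsilon (inhabits None) (cycle_len t x).

Lemma cycle_lengthP t x : cycle_len t x (cycle_length t x).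
Proof. exact/(epsilon_spec (inhabits None) (cycle_len t x))/cycle_len_exists. Qed.

Definition free_base (t : nat -> nat) (us : seq nat) l b :=
  [/\ cycle_base t us b = b, size us <= mark_index t us b & cycle_len t b l].

Definition marks_of_len (ls : seq (option nat)) l :=
  [seq i <- iota 0 (size ls) | nth None ls i == l].

Section FreeBases.

Context {t : nat -> nat} (t_inj : injective t) {us : seq nat} {ls : seq (option nat)}.
Hypothesis us_marked : marked_cycles t us ls.

Lemma mem_marks_of_len {l i} : i \in marks_of_len ls l -> i < size us /\ nth None ls i = l.
Proof.
by case: us_marked => sz _ _; rewrite mem_filter mem_iota add0n sz => /andP[/eqP-> /andP[_ ->]].
Qed.

Lemma cycles_ge_free_base l k :
  card_ge (free_base t us l) k -> cycles_ge t l (k + size (marks_of_len ls l)).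
Proof.
case: us_marked => _ us_len us_sep [s [sz s_uniq s_free]].
pose ul := [seq nth 0 us i | i <- marks_of_len ls l].
have free_unmarked x i : x \in s -> i \in marks_of_len ls l -> ~ same_cycle t (nth 0 us i) x.
  move=> xs /mem_marks_of_len[i_lt _]; have [_ unmarked _] := s_free x xs.
  exact: not_same_cycle_mark.
exists (s ++ ul); split.
- by rewrite size_cat sz size_map.
- have marks_uniq : uniq (marks_of_len ls l) := filter_uniq _ (iota_uniq _ _).
  rewrite cat_uniq s_uniq map_inj_in_uniq // ?marks_uniq ?andbT /=.
    apply/hasPn => _ /mapP[i il ->]; apply/negP => /free_unmarked /(_ il); apply.
    exact: same_cycle_refl.
  move=> i j il jl ij; have [i_lt _] := mem_marks_of_len il.
  have [j_lt _] := mem_marks_of_len jl.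
  by apply: us_sep; rewrite // ij; apply: same_cycle_refl.
- move=> x; rewrite mem_cat => /orP[/s_free[]//|/mapP[i il ->]].
  by have [i_lt <-] := mem_marks_of_len il; apply: us_len.
- move=> x y; rewrite !mem_cat => /orP[xs|/mapP[i il ->]] /orP[ys|/mapP[j jl ->]] xy.
  + have [<- _ _] := s_free x xs; have [<- _ _] := s_free y ys.
    exact: cycle_base_same_cycle.
  + by case: (free_unmarked x j xs jl); apply: same_cycle_sym.
  + by case: (free_unmarked y i ys il).
  + have [i_lt _] := mem_marks_of_len il; have [j_lt _] := mem_marks_of_len jl.
    by rewrite (us_sep i j i_lt j_lt xy).
Qed.

Lemma free_base_cycles_ge l k :
  cycles_ge t l (k + size (marks_of_len ls l)) -> card_ge (free_base t us l) k.
Proof.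
case: us_marked => sz us_len us_sep [r [rsz r_uniq r_len r_sep]].
pose marked x := mark_index t us x < size us.
pose r1 := [seq x <- r | marked x]; pose r2 := [seq x <- r | ~~ marked x].
have r1_small : size r1 <= size (marks_of_len ls l).
  have idx_uniq : uniq (map (mark_index t us) r1).
    rewrite map_inj_in_uniq ?filter_uniq // => x y.
    rewrite !mem_filter => /andP[mx xr] /andP[my yr] mxy; apply: r_sep => //.
    by apply: (same_cycle_trans_sym t_inj (same_cycle_mark us mx)); rewrite mxy; apply: same_cycle_mark.
  have idx_sub : {subset map (mark_index t us) r1 <= marks_of_len ls l}.
    move=> _ /mapP[x + ->]; rewrite mem_filter => /andP[mx xr].
    rewrite mem_filter mem_iota add0n -sz [_ < size us]mx andbT.
    have cx := same_cycle_cycle_len t_inj (same_cycle_mark us mx) (us_len _ mx).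
    by rewrite (cycle_len_uniq cx (r_len x xr)) eqxx.
  by have := uniq_leq_size idx_uniq idx_sub; rewrite size_map.
have r2_large : k <= size r2.
  by have := count_predC marked r; rewrite -!size_filter -/r1 -/r2 rsz; lia.
exists (take k (map (cycle_base t us) r2)); split.
- by rewrite size_takel // size_map.
- rewrite take_uniq // map_inj_in_uniq ?filter_uniq // => x y.
  rewrite !mem_filter => /andP[_ xr] /andP[_ yr] bxy; apply: r_sep => //.
  by apply: (same_cycle_trans t_inj (same_cycle_base us x)); rewrite bxy;
    apply/same_cycle_sym/same_cycle_base.
- move=> _ /mem_take/mapP[x + ->]; rewrite mem_filter => /andP[mx xr].
  split; first exact: cycle_base_id.
    by rewrite -(mark_index_same_cycle t_inj us (same_cycle_base us x)) leqNgt.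
  exact: (same_cycle_cycle_len t_inj (same_cycle_base us x) (r_len x xr)).
Qed.

End FreeBases.

Lemma card_ge_free_base {t t' : nat -> nat} {us vs ls} l k :
  injective t -> injective t' -> marked_cycles t us ls -> marked_cycles t' vs ls ->
  (forall l k, cycles_ge t l k <-> cycles_ge t' l k) ->
  card_ge (free_base t us l) k <-> card_ge (free_base t' vs l) k.
Proof.
move=> t_inj t'_inj us_marked vs_marked tt'.
split=> [/(cycles_ge_free_base t_inj us_marked)|/(cycles_ge_free_base t'_inj vs_marked)].
  by rewrite tt' => /(free_base_cycles_ge t'_inj vs_marked).
by rewrite -tt' => /(free_base_cycles_ge t_inj us_marked).
Qed.

(* Marked bases go to the corresponding marks, free bases of cycles of each length are
   matched by rank. *)
Definition base_match (t : nat -> nat) us (t' : nat -> nat) vs x :=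
  if mark_index t us x < size us then nth 0 vs (mark_index t us x)
  else rank_match (free_base t us (cycle_length t x)) (free_base t' vs (cycle_length t x)) x.

Lemma base_matchP {t t' : nat -> nat} {us vs ls} :
  injective t -> injective t' -> marked_cycles t us ls -> marked_cycles t' vs ls ->
  (forall l k, cycles_ge t l k <-> cycles_ge t' l k) ->
  let bs := cycle_base t us in let h := base_match t us t' vs in
  [/\ forall x, cycle_base t' vs (h (bs x)) = h (bs x),
      forall x, base_match t' vs t us (h (bs x)) = bs x &
      forall x l, cycle_len t (bs x) l -> cycle_len t' (h (bs x)) l].
Proof.
move=> t_inj t'_inj us_marked vs_marked tt' bs h.
suff match_x x : [/\ cycle_base t' vs (h (bs x)) = h (bs x),
    base_match t' vs t us (h (bs x)) = bs x &
    forall l, cycle_len t (bs x) l -> cycle_len t' (h (bs x)) l].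
  by split=> x; case: (match_x x).
have bb : cycle_base t us (bs x) = bs x by apply: cycle_base_id.
have [szu us_len us_sep] := us_marked; have [szv vs_len vs_sep] := vs_marked.
rewrite /h /base_match; case: ifP => marked.
  set i := mark_index t us (bs x) in marked *.
  have bi : bs x = nth 0 us i by rewrite -{1}bb /cycle_base -/i marked.
  have i_lt : i < size vs by rewrite szv -szu.
  split; first exact: cycle_base_nth.
    by rewrite mark_index_nth // i_lt bi.
  by move=> l; rewrite {1}bi => /(cycle_len_uniq (us_len i marked)) <-; apply: vs_len.
have unmarked : size us <= mark_index t us (bs x) by rewrite leqNgt marked.
set l0 := cycle_length t (bs x).
have free_b : free_base t us l0 (bs x) by split=> //; apply: cycle_lengthP.
have tt'l0 := fun k => card_ge_free_base l0 k t_inj t'_inj us_marked vs_marked tt'.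
have [[by' y_unmarked cy] _] := rank_matchP tt'l0 free_b.
set y := rank_match _ _ (bs x) in by' y_unmarked cy *.
split=> //.
  rewrite ifN -?leqNgt // (cycle_len_uniq (cycle_lengthP t' y) cy).
  exact: rank_matchK.
by move=> l /(cycle_len_uniq (cycle_lengthP t (bs x))) <-.
Qed.

Theorem conj_marked_cycles {t ti t' t'i : nat -> nat} {us vs ls} :
  cancel t ti -> cancel ti t -> cancel t' t'i -> cancel t'i t' ->
  marked_cycles t us ls -> marked_cycles t' vs ls ->
  (forall l k, cycles_ge t l k <-> cycles_ge t' l k) ->
  exists c c', [/\ cancel c c', cancel c' c, forall x, c (t x) = t' (c x) &
    forall i, i < size us -> c (nth 0 us i) = nth 0 vs i].
Proof.
move=> tK tiK t'K t'iK us_marked vs_marked tt'.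
have t_inj := can_inj tK; have t'_inj := can_inj t'K.
have t't : forall l k, cycles_ge t' l k <-> cycles_ge t l k by move=> l k; rewrite tt'.
have [h_base hK h_len] := base_matchP t_inj t'_inj us_marked vs_marked tt'.
have [h'_base h'K h'_len] := base_matchP t'_inj t_inj vs_marked us_marked t't.
exists (cycle_map t t' t'i (cycle_base t us) (base_match t us t' vs)),
       (cycle_map t' t ti (cycle_base t' vs) (base_match t' vs t us)).
split.
- exact: (cycle_mapK tK t'K t'iK (same_cycle_base us) h_len
    (fun x y => cycle_base_same_cycle t'_inj vs) h_base hK).
- exact: (cycle_mapK t'K tK tiK (same_cycle_base vs) h'_len
    (fun x y => cycle_base_same_cycle t_inj us) h'_base h'K).
- exact: (cycle_map_morph tK t'K t'iK (same_cycle_base us)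
    (fun x y => cycle_base_same_cycle t_inj us) h_len).
- move=> i i_lt; have [szu us_len us_sep] := us_marked; have [szv vs_len vs_sep] := vs_marked.
  have i_lt' : i < size vs by rewrite szv -szu.
  have h_nth : base_match t us t' vs (nth 0 us i) = nth 0 vs i.
    by rewrite /base_match (mark_index_nth us us_sep i i_lt) i_lt.
  rewrite (cycle_map_fwd t_inj 0 t'_inj (cycle_base_nth us us_sep i i_lt) (us_len i i_lt)) //=.
  by rewrite h_nth; apply: vs_len.
Qed.

(** * Baire category in the closure of a conjugacy class *)

Section Meagre.

Context {X : (nat -> nat) -> Prop}.

Lemma nowhere_dense0 : nowhere_dense_in X (fun _ => False).
Proof. by move=> s n Xs; exists s, 0; do 2!split=> //; move=> t _ _ []. Qed.

Lemma meagreS {A B : (nat -> nat) -> Prop} :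
  meagre_in X A -> (forall t, B t -> A t) -> meagre_in X B.
Proof. by move=> [Ms [Ms_nd AMs]] BA; exists Ms; split=> // t /BA /AMs. Qed.

Lemma meagre0 (M : (nat -> nat) -> Prop) : (forall t, ~ M t) -> meagre_in X M.
Proof. by move=> M0; exists (fun _ _ => False); split=> [k|t /M0//]; apply: nowhere_dense0. Qed.

Lemma meagre_nowhere_dense {M} : nowhere_dense_in X M -> meagre_in X M.
Proof. by move=> M_nd; exists (fun _ => M); split=> // t Mt; exists 0. Qed.

Lemma meagre_bigcup (A : nat -> (nat -> nat) -> Prop) :
  (forall i, meagre_in X (A i)) -> meagre_in X (fun t => exists i, A i t).
Proof.
move=> A_meagre.
pose cover i (Ms : nat -> (nat -> nat) -> Prop) :=
  (forall k, nowhere_dense_in X (Ms k)) /\ forall t, A i t -> exists k, Ms k t.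
pose Ms i := epsilon (inhabits (fun (_ : nat) (_ : nat -> nat) => False)) (cover i).
have MsP i : cover i (Ms i) by apply: epsilon_spec; apply: A_meagre.
exists (fun j => if unpickle j is Some (i, k) then Ms i k else fun _ => False); split.
  by move=> j; case: (unpickle j) => [[i k]|]; [apply: (MsP i).1 | apply: nowhere_dense0].
move=> t [i Ait]; have [k Mikt] := (MsP i).2 t Ait.
by exists (pickle (i, k)); rewrite pickleK.
Qed.

Lemma meagreU {A B : (nat -> nat) -> Prop} :
  meagre_in X A -> meagre_in X B -> meagre_in X (fun t => A t \/ B t).
Proof.
move=> mA mB; have := meagre_bigcup (fun i => if i is 0 then A else B).
move=> /(_ (fun i => if i is 0 then mA else mB)) mAB; apply: meagreS mAB _ => t.
by case=> [At|Bt]; [exists 0 | exists 1].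
Qed.

End Meagre.

Lemma is_perm_inj_surj (g : nat -> nat) : injective g -> (forall y, exists x, g x = y) -> is_perm g.
Proof.
move=> g_inj g_surj; pose g' y := epsilon (inhabits 0) (fun x => g x = y).
have g'K y : g (g' y) = y by apply: (epsilon_spec (inhabits 0) (fun x => g x = y)).
by exists g' => // x; apply: g_inj; rewrite g'K.
Qed.

Lemma C_rho_conj {r t} : is_perm r -> conj_class r t -> C_rho r t.
Proof. by move=> r_perm rt; split; [apply: is_perm_conj rt | exists t]. Qed.

Section Baire.

Variables (r : nat -> nat) (Ms : nat -> (nat -> nat) -> Prop).
Hypotheses (r_perm : is_perm r) (Ms_nd : forall k, nowhere_dense_in (C_rho r) (Ms k)).

(* Shrink the basic open set of [C_rho r] around [s.1] of radius [s.2] so that it misses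
   [Ms k], and so that [k] and a preimage of [k] lie below the new radius. *)
Definition baire_step k (s s' : (nat -> nat) * nat) : Prop :=
  [/\ C_rho r s'.1, agree_below s.2 s'.1 s.1, s.2 <= s'.2, k < s'.2 &
     (exists2 z, z < s'.2 & s'.1 z = k) /\
     forall t, C_rho r t -> agree_below s'.2 t s'.1 -> ~ Ms k t].

Lemma baire_step_exists k s : C_rho r s.1 -> exists s', baire_step k s s'.
Proof.
move=> Cs; have [s' [m [Cs' [agree avoid]]]] := Ms_nd k s.1 s.2 Cs.
have [[s'i _ s'iK] _] := Cs'.
exists (s', maxn m (maxn s.2 (maxn k.+1 (s'i k).+1))); split=> //=; try lia.
split; first by exists (s'i k); [lia | apply: s'iK].
by move=> t Ct ts'; apply: avoid => // i im; apply: ts'; lia.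
Qed.

Fixpoint baire_seq k :=
  if k is k'.+1 then epsilon (inhabits (r, 0)) (baire_step k' (baire_seq k')) else (r, 0).

Lemma baire_seqP k : C_rho r (baire_seq k).1 /\ baire_step k (baire_seq k) (baire_seq k.+1).
Proof.
suff Ck : C_rho r (baire_seq k).1 by split=> //; apply: epsilon_spec; apply: baire_step_exists.
elim: k => [|k Ck]; first by apply: C_rho_conj => //; apply: conj_class_refl.
by have [] := epsilon_spec (inhabits (r, 0)) _ (baire_step_exists k (baire_seq k) Ck).
Qed.

Let radius k := (baire_seq k).2.

Lemma baire_radius_mono {k j} : k <= j -> radius k <= radius j.
Proof.
elim: j => [|j IHj]; first by rewrite leqn0 => /eqP->.
rewrite leq_eqVlt => /orP[/eqP->//|/IHj kj].
by have [_ [_ _ jj1 _ _]] := baire_seqP j; apply: leq_trans kj jj1.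
Qed.

Lemma baire_seq_agree {k j} : k <= j -> agree_below (radius k) (baire_seq j).1 (baire_seq k).1.
Proof.
elim: j => [|j IHj]; first by rewrite leqn0 => /eqP-> i.
rewrite leq_eqVlt => /orP[/eqP->//|]; rewrite ltnS => kj i ik.
have [_ [_ agree _ _ _]] := baire_seqP j.
by rewrite agree ?IHj // (leq_trans ik) // baire_radius_mono.
Qed.

Definition baire_limit i := (baire_seq i.+1).1 i.

Lemma baire_limit_agree k : agree_below (radius k) baire_limit (baire_seq k).1.
Proof.
have radius_gt k' : k' < radius k'.+1 by have [_ [_ _ _ ? _]] := baire_seqP k'.
move=> i ik; rewrite /baire_limit.
rewrite -(baire_seq_agree (leq_maxl k i.+1) i ik).
by rewrite (baire_seq_agree (leq_maxr k i.+1) i (radius_gt i)).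
Qed.

Lemma C_rho_baire_limit : C_rho r baire_limit.
Proof.
have radius_gt k : k < radius k.+1 by have [_ [_ _ _ ? _]] := baire_seqP k.
split.
  apply: is_perm_inj_surj => [x y|y].
    have lt_xy z : z <= maxn x y -> z < radius (maxn x y).+1.
      by move=> zxy; apply: leq_ltn_trans zxy (radius_gt _).
    have [[s'i s'K _] _] := (baire_seqP (maxn x y).+1).1.
    rewrite !(baire_limit_agree (maxn x y).+1) ?lt_xy ?leq_maxl ?leq_maxr // => exy.
    by rewrite -(s'K x) exy s'K.
  have [_ [_ _ _ _ [[z zr fz] _]]] := baire_seqP y.
  by exists z; rewrite (baire_limit_agree y.+1 z zr).
move=> m; have [[_ approx] _] := baire_seqP m.+1; have [t' [rt' agree]] := approx m.
exists t'; split=> // i im; rewrite agree // (baire_limit_agree m.+1) //.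
by apply: ltn_trans im (radius_gt m).
Qed.

Lemma baire : exists t, C_rho r t /\ forall k, ~ Ms k t.
Proof.
exists baire_limit; split=> [|k]; first exact: C_rho_baire_limit.
have [_ [_ _ _ _ [_ avoid]]] := baire_seqP k.
by apply: avoid; [apply: C_rho_baire_limit | apply: baire_limit_agree].
Qed.

End Baire.

Definition seq_bound (A : seq nat) := (foldr maxn 0 A).+1.

Lemma mem_seq_bound (A : seq nat) a : a \in A -> a < seq_bound A.
Proof. by move=> aA; rewrite ltnS mem_leq_foldr_max. Qed.

Lemma C_rho_approx {r t} (A : seq nat) : C_rho r t -> exists t', conj_class r t' /\ {in A, t' =1 t}.
Proof.
move=> [_ approx]; have [t' [rt' agree]] := approx (seq_bound A).
by exists t'; split=> // a /mem_seq_bound; apply: agree.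
Qed.

Definition swap_nat (a b z : nat) := if z == a then b else if z == b then a else z.

Lemma swap_natK a b : involutive (swap_nat a b).
Proof.
move=> z; rewrite /swap_nat.
case: (z =P a) => [->|za]; first by case: (b =P a) => [->//|ba]; rewrite eqxx.
case: (z =P b) => [->|zb]; first by rewrite eqxx.
by move/eqP/negbTE: za => ->; move/eqP/negbTE: zb => ->.
Qed.

Lemma extend_bijection {f : nat -> nat} {A : seq nat} : {in A &, injective f} ->
  exists g g', [/\ cancel g g', cancel g' g & {in A, g =1 f}].
Proof.
elim: A => [|a A IHA] f_inj; first by exists id, id.
have [|g [g' [gK g'K gf]]] := IHA; first by move=> x y xA yA; apply: f_inj; rewrite inE ?xA ?yA orbT.
exists (swap_nat (g a) (f a) \o g), (g' \o swap_nat (g a) (f a)).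
split=> [z|z|x] /=; [by rewrite swap_natK gK | by rewrite g'K swap_natK |].
rewrite inE => /predU1P[->|xA]; first by rewrite /swap_nat eqxx.
have [->|xa] := eqVneq x a; first by rewrite /swap_nat eqxx.
rewrite /swap_nat (inj_eq (can_inj gK)) (negbTE xa) gf //.
have /negbTE-> // : f x != f a.
by apply: contra xa => /eqP/f_inj -> //; rewrite inE ?xA ?eqxx ?orbT.
Qed.

Lemma pullback_agree {r : nat -> nat} {F S : seq nat} {psi : nat -> nat} :
  {subset F <= S} -> {subset map r F <= S} -> {in S &, injective psi} ->
  {in F, forall a, r (psi a) = psi (r a)} ->
  exists g g', [/\ cancel g g', cancel g' g, {in S, g =1 psi} &
    {in F, (fun z => g' (r (g z))) =1 r}].
Proof.
move=> FS rFS psi_inj psi_morph; have [g [g' [gK g'K gpsi]]] := extend_bijection psi_inj.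
exists g, g'; split=> // a aF; have raS : r a \in S by apply/rFS/map_f.
by rewrite gpsi ?FS // psi_morph // -gpsi // gK.
Qed.

Lemma P_rho_embedding r p : P_rho r p ->
  exists g g', [/\ cancel g g', cancel g' g & forall xy, xy \in p -> r (g xy.1) = g xy.2].
Proof.
move=> [_ [t [Ct tp]]]; have [t' [[s [s' [sK [s'K t's]]]] agree]] := C_rho_approx (pdom p) Ct.
exists s', s; split=> // xy xyp.
have : t' xy.1 = xy.2 by rewrite agree ?tp //; apply/mapP; exists xy.
by rewrite t's => <-; rewrite sK.
Qed.

Lemma is_pinj_graph (t : nat -> nat) (p : seq (nat * nat)) : injective t -> uniq p ->
  (forall xy, xy \in p -> t xy.1 = xy.2) -> is_pinj p.
Proof.
move=> t_inj p_uniq tp; split; rewrite map_inj_in_uniq // => -[a b] [c d] /tp /= <- /tp /= <- /=.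
  by move->.
by move/t_inj->.
Qed.

Definition dense_open r (Q : (nat -> nat) -> Prop) :=
  forall s, C_rho r s -> forall F : seq nat, exists t, [/\ conj_class r t, {in F, t =1 s} &
    exists A : seq nat, forall t', {in A, t' =1 t} -> Q t'].

Lemma nowhere_dense_not {r Q} : is_perm r -> dense_open r Q ->
  nowhere_dense_in (C_rho r) (fun t => ~ Q t).
Proof.
move=> r_perm Q_do s n Cs; have [t [rt ts [A QA]]] := Q_do s Cs (iota 0 n).
exists t, (seq_bound A); split; first exact: C_rho_conj.
split=> [i i_lt|t' _ t't]; first by apply: ts; rewrite mem_iota.
by case; apply: QA => a /mem_seq_bound; apply: t't.
Qed.

Lemma dense_open_all {T : eqType} r (I : seq T) (Q : T -> (nat -> nat) -> Prop) :
  is_perm r -> (forall i, i \in I -> dense_open r (Q i)) ->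
  dense_open r (fun t => forall i, i \in I -> Q i t).
Proof.
move=> r_perm; elim: I => [|i I IHI] Q_do s Cs F.
  by have [t [rt ts]] := C_rho_approx F Cs; exists t; split=> //; exists [::].
have [|t1 [rt1 t1s [A1 QA1]]] := IHI _ s Cs F.
  by move=> j jI; apply: Q_do; rewrite inE jI orbT.
have [t2 [rt2 t2t1 [A2 QA2]]] := Q_do i (mem_head _ _) t1 (C_rho_conj r_perm rt1) (F ++ A1).
exists t2; split=> // [a aF|]; first by rewrite t2t1 ?mem_cat ?aF // t1s.
exists (A1 ++ A2) => t' t't2 j; rewrite inE => /predU1P[->|jI].
  by apply: QA2 => a aA2; apply: t't2; rewrite mem_cat aA2 orbT.
by apply: QA1 => // a aA1; rewrite t't2 ?t2t1 // mem_cat aA1 ?orbT.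
Qed.

Lemma open_iter {t t' : nat -> nat} {x k} : {in traject t x k, t' =1 t} ->
  forall j, j <= k -> iter j t' x = iter j t x.
Proof.
move=> t't; elim=> [//|j IHj] jk /=; rewrite IHj ?(ltnW jk) // t't //.
by apply/trajectP; exists j.
Qed.

Lemma open_iter_eq (t : nat -> nat) x y k : iter k t x = y ->
  exists A : seq nat, forall t', {in A, t' =1 t} -> iter k t' x = y.
Proof. by move=> <-; exists (traject t x k) => t' /open_iter ->. Qed.

Lemma open_same_cycle (t : nat -> nat) x y : same_cycle t x y ->
  exists A : seq nat, forall t', {in A, t' =1 t} -> same_cycle t' x y.
Proof.
move=> [k [/open_iter_eq[A tA]|/open_iter_eq[A tA]]]; exists A => t' /tA fk.
  by exists k; left.
by exists k; right.
Qed.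

Lemma cycle_len_agree (t t' : nat -> nat) x n :
  (forall j, j <= n -> iter j t' x = iter j t x) ->
  cycle_len t x (Some n) -> cycle_len t' x (Some n).
Proof.
move=> t't [n_gt0 [fn minn]]; do 2!split=> //; first by rewrite t't.
by move=> k k_gt0 kn; rewrite t't ?(ltnW kn) //; apply: minn.
Qed.

Lemma open_cycles_ge (t : nat -> nat) n k : cycles_ge t (Some n) k ->
  exists A : seq nat, forall t', {in A, t' =1 t} -> cycles_ge t' (Some n) k.
Proof.
move=> [s [sz s_uniq s_len s_sep]].
exists (flatten [seq traject t x n | x <- s]) => t' t't.
have t't_s x : x \in s -> forall j, j <= n -> iter j t' x = iter j t x.
  move=> xs; apply: open_iter => a a_orb; apply: t't.
  by apply/flattenP; exists (traject t x n) => //; apply/mapP; exists x.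
exists s; split=> // [x xs|x y xs ys [j fj]]; first exact: cycle_len_agree (t't_s x xs) (s_len x xs).
apply: s_sep => //; have [n_gt0 [fnx _]] := s_len x xs; have [_ [fny _]] := s_len y ys.
have f'nx : iter n t' x = x by rewrite t't_s.
have f'ny : iter n t' y = y by rewrite t't_s.
have jn : j %% n <= n by rewrite ltnW // ltn_pmod.
exists (j %% n); case: fj => fj; [left|right].
  by rewrite -(t't_s x xs _ jn) -(iter_modn _ f'nx).
by rewrite -(t't_s y ys _ jn) -(iter_modn _ f'ny).
Qed.

Definition orbit_finite x (t : nat -> nat) := exists2 N, 0 < N & iter N t x = x.

Lemma orbit_finiteP t x : ~ cycle_len t x None <-> orbit_finite x t.
Proof.
split=> [not_inf|[N N_gt0 fN] inf]; last exact: inf N N_gt0 fN.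
by apply: NNPP => not_fin; apply: not_inf => k k_gt0 fk; apply: not_fin; exists k.
Qed.

Lemma open_orbit_finite t x : orbit_finite x t ->
  exists A : seq nat, forall t', {in A, t' =1 t} -> orbit_finite x t'.
Proof. by move=> [N N_gt0 /open_iter_eq[A tA]]; exists A => t' /tA; exists N. Qed.

Lemma cycles_ge_C_rho r t n k : C_rho r t -> cycles_ge t (Some n) k -> cycles_ge r (Some n) k.
Proof.
move=> Ct /open_cycles_ge[A tA]; have [t' [rt' t't]] := C_rho_approx A Ct.
by apply/(cycles_ge_conj rt'); apply: tA.
Qed.

Lemma long_cycle_avoiding {t : nat -> nat} (S : seq nat) K : injective t ->
  ~ finite_cycles_bounded t ->
  exists c N, [/\ cycle_len t c (Some N), K <= N & forall a, a \in S -> ~ same_cycle t c a].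
Proof.
move=> t_inj unbounded.
pose flen a := if cycle_length t a is Some n then n else 0.
pose B := maxn K (foldr maxn 0 (map flen S)).
have [c [N [cN BN]]] : exists c N, cycle_len t c (Some N) /\ B < N.
  apply: NNPP => small; apply: unbounded; exists B => y n yn.
  by rewrite leqNgt; apply/negP => Bn; apply: small; exists y, n.
exists c, N; split=> //; first lia.
move=> a aS ca; have flen_a : flen a = N.
  by rewrite /flen (cycle_len_uniq (cycle_lengthP t a) (same_cycle_cycle_len t_inj ca cN)).
have : flen a <= B by rewrite (leq_trans _ (leq_maxr _ _)) // mem_leq_foldr_max // map_f.
lia.
Qed.

(** * Surgery on infinite cycles *)

Lemma forward_root {t : nat -> nat} x (xs : seq nat) : injective t ->
  {in x :: xs &, forall a b, same_cycle t a b} ->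
  exists2 b, b \in x :: xs & forall a, a \in x :: xs -> exists k, iter k t b = a.
Proof.
move=> t_inj; elim: xs x => [|y xs IHxs] x same.
  by exists x; rewrite ?mem_head // => a; rewrite inE => /eqP->; exists 0.
have [|b bxs b_root] := IHxs y.
  by move=> a c ay cy; apply: same; rewrite in_cons ?ay ?cy orbT.
have [k [fk|fk]] : same_cycle t x b by apply: same; rewrite ?mem_head // in_cons bxs orbT.
  exists x => [|a]; first exact: mem_head.
  rewrite in_cons => /predU1P[->|axs]; first by exists 0.
  by have [j <-] := b_root a axs; exists (j + k); rewrite iterD fk.
exists b => [|a]; first by rewrite in_cons bxs orbT.
by rewrite in_cons => /predU1P[->|/b_root//]; exists k.
Qed.

Lemma bounded_witnesses {T : eqType} {P : T -> nat -> Prop} {s : seq T} :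
  (forall a, a \in s -> exists k, P a k) -> exists K, forall a, a \in s -> exists2 k, k < K & P a k.
Proof.
elim: s => [|a s IHs] wit; first by exists 0.
have [|K K_wit] := IHs; first by move=> c cs; apply: wit; rewrite inE cs orbT.
have [k Pak] := wit a (mem_head _ _).
exists (maxn K k.+1) => c; rewrite inE => /predU1P[->|cs]; first by exists k => //; lia.
by have [j jK Pcj] := K_wit c cs; exists j => //; lia.
Qed.

Lemma ray_positions {t : nat -> nat} (S : seq nat) x : injective t -> cycle_len t x None ->
  exists K (pos : nat -> nat) b, [/\ same_cycle t x b,
    forall a, a \in S -> same_cycle t x a -> pos a < K /\ iter (pos a) t b = a &
    forall a, a \in S -> t a \in S -> same_cycle t x a -> pos (t a) = (pos a).+1].
Proof.
move=> t_inj x_inf; pose xs := [seq a <- S | pbool (same_cycle t x a)].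
have [|b bxs b_root] := forward_root x xs t_inj.
  move=> a c; rewrite !inE !mem_filter => /predU1P[->|/andP[/pboolP xa _]].
    by move=> /predU1P[->|/andP[/pboolP xc _]]; [apply: same_cycle_refl|].
  move=> /predU1P[->|/andP[/pboolP xc _]]; first exact: same_cycle_sym.
  exact: same_cycle_trans_sym xa xc.
have xb : same_cycle t x b.
  by move: bxs; rewrite inE mem_filter => /predU1P[->|/andP[/pboolP//]]; apply: same_cycle_refl.
have b_inf := same_cycle_cycle_len t_inj xb x_inf.
have [K K_wit] := bounded_witnesses b_root.
pose pos a := epsilon (inhabits 0) (fun k => k < K /\ iter k t b = a).
have posP a : a \in S -> same_cycle t x a -> pos a < K /\ iter (pos a) t b = a.
  move=> aS xa; apply: (epsilon_spec (inhabits 0) (fun k => k < K /\ iter k t b = a)).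
  have [|k ? ?] := K_wit a; last by exists k.
  by rewrite inE mem_filter aS andbT; apply/orP; right; apply/pboolP.
exists K, pos, b; split=> // a aS taS xa.
have xta : same_cycle t x (t a) := same_cycle_trans t_inj xa (same_cycle_iter t a 1).
apply/(cycle_len_infP t_inj _ _ b_inf).
by rewrite iterS (posP a aS xa).2 (posP _ taS xta).2.
Qed.

(* Close the ray of [x] into a finite cycle by moving it onto a long cycle away from [F]. *)
Lemma close_ray {r} (F : seq nat) x : is_perm r -> ~ finite_cycles_bounded r ->
  cycle_len r x None -> exists t, [/\ conj_class r t, {in F, t =1 r} & orbit_finite x t].
Proof.
move=> [ri rK _] unbounded x_inf; have r_inj := can_inj rK.
pose S := x :: F ++ map r F.
have [K [pos [b [xb posP posS]]]] := ray_positions S x r_inj x_inf.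
have [c [N [cN KN c_far]]] := long_cycle_avoiding S K r_inj unbounded.
pose psi a := if pbool (same_cycle r x a) then iter (pos a) r c else a.
have psi_inj : {in S &, injective psi}.
  move=> a a' aS a'S; rewrite /psi.
  case: pboolP => xa; case: pboolP => xa' //.
  - have [pa ea] := posP a aS xa; have [pa' ea'] := posP a' a'S xa'.
    move/(cycle_len_finP r_inj _ _ cN); rewrite !modn_small ?(leq_trans _ KN) // => pe.
    by rewrite -ea -ea' pe.
  - by move=> fa; case: (c_far a' a'S); rewrite -fa; apply: same_cycle_iter.
  - by move=> fa; case: (c_far a aS); rewrite fa; apply: same_cycle_iter.
have FS : {subset F <= S} by move=> a aF; rewrite inE mem_cat aF orbT.
have rFS : {subset map r F <= S} by move=> a arF; rewrite inE mem_cat arF !orbT.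
have psi_morph : {in F, forall a, r (psi a) = psi (r a)}.
  move=> a aF; have raS := rFS _ (map_f r aF); have ara : same_cycle r a (r a) := same_cycle_iter r a 1.
  rewrite /psi; case: (pboolP (same_cycle r x a)) => xa.
    by rewrite (pboolT (same_cycle_trans r_inj xa ara)) (posS a (FS a aF) raS xa).
  by case: pboolP => // xra; case: xa; apply: (same_cycle_trans r_inj xra (same_cycle_sym ara)).
have [g [g' [gK g'K gpsi tF]]] := pullback_agree FS rFS psi_inj psi_morph.
exists (fun z => g' (r (g z))); split=> //; first by exists g', g.
have [N_gt0 [fN _]] := cN; exists N => //.
have gx : g x = iter (pos x) r c by rewrite gpsi ?mem_head // /psi (pboolT (same_cycle_refl r x)).
by rewrite (iter_conj _ _ g'K gK (fun z => erefl)) gx iterC fN -gx gK.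
Qed.

(* Join the rays of [x] and [y] by moving both onto the cycle of [y], one after the other. *)
Lemma join_rays {r} (F : seq nat) x y : is_perm r -> cycle_len r x None -> cycle_len r y None ->
  ~ same_cycle r x y -> exists t, [/\ conj_class r t, {in F, t =1 r} & same_cycle t x y].
Proof.
move=> [ri rK _] x_inf y_inf not_xy; have r_inj := can_inj rK.
pose S := x :: y :: F ++ map r F.
have [Kx [px [bx [_ pxP pxS]]]] := ray_positions S x r_inj x_inf.
have [Ky [py [by_ [_ pyP pyS]]]] := ray_positions S y r_inj y_inf.
pose on_x a := pbool (same_cycle r x a); pose on_y a := pbool (same_cycle r y a).
pose pos a := if on_x a then px a else Kx + py a.
pose psi a := if on_x a || on_y a then iter (pos a) r y else a.
have pos_inj : {in S &, forall a a', on_x a || on_y a -> on_x a' || on_y a' ->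
    pos a = pos a' -> a = a'}.
  move=> a a' aS a'S; rewrite /pos.
  case xa: (on_x a); case xa': (on_x a') => //= ya ya' pe.
  - by rewrite -(pxP a aS (pboolP _ xa)).2 -(pxP a' a'S (pboolP _ xa')).2 pe.
  - by have := (pxP a aS (pboolP _ xa)).1; lia.
  - by have := (pxP a' a'S (pboolP _ xa')).1; lia.
  - have pe' : py a = py a' by lia.
    by rewrite -(pyP a aS (pboolP _ ya)).2 -(pyP a' a'S (pboolP _ ya')).2 pe'.
have psi_inj : {in S &, injective psi}.
  move=> a a' aS a'S; rewrite /psi.
  case: ifP => ra; case: ifP => ra' //.
  - by move/(cycle_len_infP r_inj _ _ y_inf); apply: pos_inj.
  - by move=> fa; move: ra'; rewrite -fa /on_y (pboolT (same_cycle_iter _ _ _)) orbT.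
  - by move=> fa; move: ra; rewrite fa /on_y (pboolT (same_cycle_iter _ _ _)) orbT.
have FS : {subset F <= S} by move=> a aF; rewrite !inE mem_cat aF !orbT.
have rFS : {subset map r F <= S} by move=> a arF; rewrite !inE mem_cat arF !orbT.
have psi_morph : {in F, forall a, r (psi a) = psi (r a)}.
  move=> a aF; have aS := FS a aF; have raS := rFS _ (map_f r aF).
  have ara : same_cycle r a (r a) := same_cycle_iter r a 1.
  have on_r z : pbool (same_cycle r z (r a)) = pbool (same_cycle r z a).
    by apply: eq_pbool; split=> za; [apply: (same_cycle_trans r_inj za (same_cycle_sym ara)) |
      apply: (same_cycle_trans r_inj za ara)].
  rewrite /psi /on_x /on_y !on_r; case: ifP => // ra.
  suff -> : pos (r a) = (pos a).+1 by [].
  rewrite /pos /on_x on_r; case: ifP => xa; first by rewrite (pxS a aS raS (pboolP _ xa)).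
  by move: ra; rewrite xa /= => /pboolP ya; rewrite (pyS a aS raS ya) addnS.
have [g [g' [gK g'K gpsi tF]]] := pullback_agree FS rFS psi_inj psi_morph.
exists (fun z => g' (r (g z))); split=> //; first by exists g', g.
have x_on : on_x x by apply/pboolP/same_cycle_refl.
have y_on : on_y y by apply/pboolP/same_cycle_refl.
have gx : g x = iter (px x) r y by rewrite gpsi ?mem_head // /psi /pos x_on.
have gy : g y = iter (Kx + py y) r y.
  have x_off : on_x y = false by apply/negbTE/negP => /pboolP.
  by rewrite gpsi ?inE ?eqxx ?orbT // /psi /pos y_on x_off.
have pxx : px x < Kx := (pxP x (mem_head _ _) (same_cycle_refl r x)).1.
exists (Kx + py y - px x); left.
rewrite (iter_conj _ _ g'K gK (fun z => erefl)) gx -iterD subnK; last lia.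
by rewrite -gy gK.
Qed.

Lemma dense_openP r Q :
  (forall r', conj_class r r' -> forall F : seq nat, exists t, [/\ conj_class r' t,
     {in F, t =1 r'} & exists A : seq nat, forall t', {in A, t' =1 t} -> Q t']) ->
  dense_open r Q.
Proof.
move=> near_conj s Cs F; have [r' [rr' r's]] := C_rho_approx F Cs.
have [t [r't tr' QA]] := near_conj r' rr' F.
exists t; split=> //; first exact: conj_class_trans rr' r't.
by move=> a aF; rewrite tr' ?r's.
Qed.

Lemma dense_open_conj r Q :
  (forall r', conj_class r r' -> exists A : seq nat, forall t', {in A, t' =1 r'} -> Q t') ->
  dense_open r Q.
Proof.
move=> open_conj; apply: dense_openP => r' /open_conj QA F.
by exists r'; split=> //; apply: conj_class_refl.
Qed.

Lemma dense_open_cycles_ge {r n k} :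
  cycles_ge r (Some n) k -> dense_open r (fun t => cycles_ge t (Some n) k).
Proof.
move=> ge_k; apply: dense_open_conj => r' rr'.
by apply/open_cycles_ge/(cycles_ge_conj rr').
Qed.

Lemma dense_open_long_orbit {r} B : cycles_ge r None 1 ->
  dense_open r (fun t => exists x, forall j, 0 < j -> j <= B -> iter j t x <> x).
Proof.
move=> inf; apply: dense_open_conj => r' rr'.
have /cycles_ge1P[x x_inf] : cycles_ge r' None 1 by apply/(cycles_ge_conj rr').
exists (traject r' x B.+1) => t' /open_iter t'r'; exists x => j j_gt0 jB.
by rewrite t'r' 1?ltnW //; apply: x_inf.
Qed.

Lemma dense_open_orbit_finite {r} x : is_perm r -> ~ finite_cycles_bounded r ->
  dense_open r (orbit_finite x).
Proof.
move=> r_perm unbounded; apply: dense_openP => r' rr' F.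
have r'_perm := is_perm_conj r_perm rr'.
case: (classic (cycle_len r' x None)) => [x_inf|/orbit_finiteP/open_orbit_finite fin].
  have [|t [r't tr' /open_orbit_finite fin]] := close_ray F x r'_perm _ x_inf; last by exists t.
  by move=> bounded; apply/unbounded/(finite_cycles_bounded_conj rr').
by exists r'; split=> //; apply: conj_class_refl.
Qed.

Definition joined x y (t : nat -> nat) := [\/ orbit_finite x t, orbit_finite y t | same_cycle t x y].

Lemma dense_open_joined {r} x y : is_perm r -> dense_open r (joined x y).
Proof.
move=> r_perm; apply: dense_openP => r' rr' F; have r'_perm := is_perm_conj r_perm rr'.
have conj_refl := conj_class_refl r'.
case: (classic (cycle_len r' x None)) => [x_inf|/orbit_finiteP/open_orbit_finite[A fin]].
  case: (classic (cycle_len r' y None)) => [y_inf|/orbit_finiteP/open_orbit_finite[A fin]].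
    case: (classic (same_cycle r' x y)) => [/open_same_cycle[A xy]|not_xy].
      by exists r'; split=> //; exists A => t' /xy; apply: Or33.
    have [t [r't tr' /open_same_cycle[A xy]]] := join_rays F x y r'_perm x_inf y_inf not_xy.
    by exists t; split=> //; exists A => t' /xy; apply: Or33.
  by exists r'; split=> //; exists A => t' /fin; apply: Or32.
by exists r'; split=> //; exists A => t' /fin; apply: Or31.
Qed.

(** * Generic permutations *)

Definition bounded_with_infinite_cycle r := finite_cycles_bounded r /\ cycles_ge r None 1.

(* The cycle counts of the generic element of [C_rho r]. *)
Definition typical r t := [/\ C_rho r t,
  forall n k, cycles_ge r (Some n) k -> cycles_ge t (Some n) k,
  bounded_with_infinite_cycle r -> cycles_ge t None 1 /\ ~ cycles_ge t None 2 &
  ~ bounded_with_infinite_cycle r -> ~ cycles_ge t None 1].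

Section Typical.

Variable r : nat -> nat.
Hypothesis r_perm : is_perm r.

Lemma meagre_missing_cycles :
  meagre_in (C_rho r) (fun t => exists n k, cycles_ge r (Some n) k /\ ~ cycles_ge t (Some n) k).
Proof.
apply: meagre_bigcup => n; apply: meagre_bigcup => k.
case: (classic (cycles_ge r (Some n) k)) => [ge_k|not_k]; last by apply: meagre0 => t [].
apply: (meagreS (meagre_nowhere_dense (nowhere_dense_not r_perm (dense_open_cycles_ge ge_k)))).
by move=> t [].
Qed.

Lemma meagre_no_infinite_cycle : meagre_in (C_rho r)
  (fun t => [/\ C_rho r t, bounded_with_infinite_cycle r & ~ cycles_ge t None 1]).
Proof.
case: (classic (bounded_with_infinite_cycle r)) => [[[B bounded] inf]|]; last first.
  by move=> not_bi; apply: meagre0 => t [].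
apply: (meagreS (meagre_nowhere_dense (nowhere_dense_not r_perm (dense_open_long_orbit B inf)))).
move=> t [Ct _ no_inf] [x x_long]; apply/no_inf/cycles_ge1P; exists x.
have [[n|] cx] := cycle_len_exists t x => //; have [n_gt0 [fn _]] := cx.
have /cycles_ge1P[y /bounded nB] : cycles_ge r (Some n) 1.
  by apply: cycles_ge_C_rho Ct _; apply/cycles_ge1P; exists x.
by case: (x_long n n_gt0 nB fn).
Qed.

Lemma meagre_not_joined : meagre_in (C_rho r) (fun t => exists x y, ~ joined x y t).
Proof.
apply: meagre_bigcup => x; apply: meagre_bigcup => y.
exact/meagre_nowhere_dense/nowhere_dense_not/dense_open_joined.
Qed.

Lemma meagre_extra_infinite_cycle : meagre_in (C_rho r)
  (fun t => [/\ C_rho r t, ~ bounded_with_infinite_cycle r & cycles_ge t None 1]).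
Proof.
case: (classic (finite_cycles_bounded r)) => [[B bounded]|unbounded].
  apply: meagre0 => t [Ct not_bi /cycles_ge1P[x x_inf]].
  have [r' [rr' r't]] := C_rho_approx (traject t x B.+1) Ct.
  have [[n|] cx] := cycle_len_exists r' x.
    have [s [s' [sK [s'K r's]]]] := rr'; have [n_gt0 [fn _]] := cx.
    have nB := bounded _ _ ((cycle_len_conj sK s'K r's x (Some n)).1 cx).
    by apply: (x_inf n n_gt0); rewrite -(open_iter r't) //; lia.
  by apply: not_bi; split; [exists B | apply/(cycles_ge_conj rr')/cycles_ge1P; exists x].
have finite_orbits : meagre_in (C_rho r) (fun t => exists x, ~ orbit_finite x t).
  apply: meagre_bigcup => x; apply: meagre_nowhere_dense.
  exact: nowhere_dense_not r_perm (dense_open_orbit_finite x r_perm unbounded).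
apply: (meagreS finite_orbits) => t [_ _ /cycles_ge1P[x x_inf]]; exists x.
by move/orbit_finiteP; apply.
Qed.

Lemma typical_comeagre : meagre_in (C_rho r) (fun t => C_rho r t /\ ~ typical r t).
Proof.
have := meagreU (meagreU meagre_missing_cycles meagre_no_infinite_cycle)
                (meagreU meagre_not_joined meagre_extra_infinite_cycle).
move=> /meagreS; apply=> t [Ct not_typical].
case: (classic (forall n k, cycles_ge r (Some n) k -> cycles_ge t (Some n) k)) => [fin|]; last first.
  move=> not_fin; left; left; apply: NNPP => none; apply: not_fin => n k ge_k.
  by apply: NNPP => not_k; apply: none; exists n, k.
case: (classic (bounded_with_infinite_cycle r)) => bi; last first.
  by right; right; split=> //; apply: NNPP => no_inf; apply: not_typical; split.
case: (classic (cycles_ge t None 1)) => [inf|]; last by left; right.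
right; left; apply: NNPP => all_joined; apply: not_typical.
split=> // _; split=> //.
move=> [[|x [|y s]] [//= _ /andP[xy _] s_len s_sep]]; apply: all_joined; exists x, y.
have xs : x \in [:: x, y & s] := mem_head _ _.
have ys : y \in [:: x, y & s] by rewrite !inE eqxx orbT.
case=> [/orbit_finiteP|/orbit_finiteP|/(s_sep x y xs ys) eq_xy]; [by apply; apply: s_len..|].
by move: xy; rewrite eq_xy mem_head.
Qed.

End Typical.

Lemma typical_cycles_ge_fin {r t} n k : typical r t ->
  cycles_ge t (Some n) k <-> cycles_ge r (Some n) k.
Proof. by move=> [Ct fin _ _]; split; [apply: cycles_ge_C_rho | apply: fin]. Qed.

Lemma typical_cycles_ge_inf {r t} k : typical r t ->
  cycles_ge t None k <-> k = 0 \/ k = 1 /\ bounded_with_infinite_cycle r.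
Proof.
move=> [_ _ one none]; split=> [|[->|[-> /one[]//]]]; last exact: cycles_ge0.
case: k => [|[|k]] ge_k; [by left | right | exfalso].
  by split=> //; apply: NNPP => /none.
case: (classic (bounded_with_infinite_cycle r)) => [/one[_]|/none]; apply.
  exact: cycles_geW ge_k.
exact: cycles_geW ge_k.
Qed.

Lemma typical_conj {r t t'} : typical r t -> typical r t' -> conj_class t t'.
Proof.
move=> tt tt'; have [[[ti tK tiK] _] _ _ _] := tt; have [[[t'i t'K t'iK] _] _ _ _] := tt'.
have same_counts l k : cycles_ge t l k <-> cycles_ge t' l k.
  case: l => [n|].
    by rewrite (typical_cycles_ge_fin n k tt) (typical_cycles_ge_fin n k tt').
  by rewrite (typical_cycles_ge_inf k tt) (typical_cycles_ge_inf k tt').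
have no_marks u : marked_cycles u [::] [::] by split=> // i j.
have [c [c' [cK c'K ct _]]] :=
  conj_marked_cycles tK tiK t'K t'iK (no_marks t) (no_marks t') same_counts.
by exists c, c'; do 2!split=> //; move=> x; rewrite ct c'K.
Qed.

Lemma meagre_avoid {r M} : is_perm r -> meagre_in (C_rho r) M -> exists t, C_rho r t /\ ~ M t.
Proof.
move=> r_perm [Ms [Ms_nd MMs]]; have [t [Ct not_Ms]] := baire r Ms r_perm Ms_nd.
by exists t; split=> // /MMs[k]; apply: not_Ms.
Qed.

Lemma typical_generic {r t} : is_perm r -> typical r t -> generic r t.
Proof.
move=> r_perm tt; split; first by case: tt.
apply: (meagreS (typical_comeagre r r_perm)) => t' [Ct' not_conj]; split=> // tt'.
by apply: not_conj; apply: typical_conj tt tt'.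
Qed.

Lemma generic_typical {r g} : is_perm r -> generic r g -> exists t, typical r t /\ conj_class g t.
Proof.
move=> r_perm [Cg g_comeagre].
have [t [Ct not_bad]] := meagre_avoid r_perm (meagreU g_comeagre (typical_comeagre r r_perm)).
by exists t; split; apply: NNPP => not_t; apply: not_bad; [right | left].
Qed.

Lemma generic_cycle_fun {r g} : is_perm r -> generic r g ->
  [/\ forall n, 0 < n -> cycle_fun r (Some n) = cycle_fun g (Some n),
      ~ finite_cycles_bounded r -> cycle_fun g None = Some 0,
      finite_cycles_bounded r -> cycle_fun r None <> Some 0 -> cycle_fun g None = Some 1 &
      cycle_fun r None = Some 0 -> cycle_fun g None = Some 0].
Proof.
move=> r_perm gg; have [t [tt gt]] := generic_typical r_perm gg.
have [[[gi gK _] _] _] := gg; have g_inj := can_inj gK.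
have [ri rK _] := r_perm; have r_inj := can_inj rK.
have g_counts l k : cycles_ge g l k <-> cycles_ge t l k by rewrite (cycles_ge_conj gt).
have no_inf : ~ bounded_with_infinite_cycle r -> cycle_fun g None = Some 0.
  move=> not_bi; apply: (cycle_fun_exact g_inj (cycles_ge0 _ _)).
  by rewrite g_counts (typical_cycles_ge_inf 1 tt) => -[//|[_ /not_bi]].
split.
- move=> n _; apply: eq_cycle_fun => // k.
  by rewrite g_counts (typical_cycles_ge_fin n k tt).
- by move=> unbounded; apply: no_inf => -[].
- move=> bounded inf; have r_inf : cycles_ge r None 1.
    by apply: NNPP => no; apply/inf/(cycle_fun_exact r_inj (cycles_ge0 _ _)).
  apply: (cycle_fun_exact g_inj); rewrite g_counts (typical_cycles_ge_inf _ tt).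
    by right.
  by case=> [|[]].
- move=> /count_cycles_fun /(count_cyclesE r_inj) [_ no_r_inf]; apply: no_inf => -[_].
  exact: no_r_inf.
Qed.

(** * Cofinal amalgamation *)

Definition embeds (r g : nat -> nat) (p : seq (nat * nat)) :=
  forall xy, xy \in p -> r (g xy.1) = g xy.2.

Definition orbit_segment (t : nat -> nat) z n :=
  [seq (iter j t z, iter j.+1 t z) | j <- iota 0 n].

Definition segment_len L (l : option nat) := if l is Some n then n else L.

Definition base_segments (t : nat -> nat) L (bases : seq (nat * option nat)) :=
  undup (flatten [seq orbit_segment t bz.1 (segment_len L bz.2) | bz <- bases]).

Lemma embeds_segment_iter {r g t p z n} : embeds r g p -> pext (orbit_segment t z n) p ->
  forall j, j <= n -> g (iter j t z) = iter j r (g z).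
Proof.
move=> gp seg_p; elim=> [//|j IHj] jn.
have /gp /= <- : (iter j t z, iter j.+1 t z) \in p.
  by apply: seg_p; apply/mapP; exists j; rewrite ?mem_iota.
by rewrite IHj // ltnW.
Qed.

Lemma segment_sub_base_segments {t L bases z l} : (z, l) \in bases ->
  pext (orbit_segment t z (segment_len L l)) (base_segments t L bases).
Proof.
move=> zb xy xy_seg; rewrite mem_undup; apply/flattenP.
by exists (orbit_segment t z (segment_len L l)) => //; apply/mapP; exists (z, l).
Qed.

Lemma mem_base_segments t L bases x :
  x \in pdom (base_segments t L bases) ++ prng (base_segments t L bases) ->
  exists z l j, [/\ (z, l) \in bases, j <= segment_len L l & x = iter j t z].
Proof.
rewrite mem_cat => /orP[] /mapP[[a b]]; rewrite mem_undup => /flattenP[s]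
  /mapP[[z l] zb ->] /mapP[j]; rewrite mem_iota add0n => /andP[_ jn] [-> ->] /= ->.
  by exists z, l, j; split=> //; apply: ltnW.
by exists z, l, j.+1.
Qed.

Lemma base_segments_graph t L bases xy : xy \in base_segments t L bases -> t xy.1 = xy.2.
Proof. by rewrite mem_undup => /flattenP[s] /mapP[[z l] _ ->] /mapP[j _ ->]. Qed.

Lemma amalgamate_embeddings {r} {A : seq nat} {p1 p2 : seq (nat * nat)} {g1 g1' g2 g2' c c'} :
  is_perm r -> cancel g1 g1' -> cancel g1' g1 -> cancel g2 g2' -> cancel g2' g2 ->
  cancel c c' -> cancel c' c -> (forall x, c (r x) = r (c x)) ->
  embeds r g1 p1 -> embeds r g2 p2 -> {in A, forall x, c (g1 x) = g2 x} ->
  exists p3 alpha, [/\ P_rho r p3, is_perm alpha, {in A, forall x, alpha x = x},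
    pext p1 p3 & pext (pimg alpha p2) p3].
Proof.
move=> r_perm g1K g1'K g2K g2'K cK c'K cr g1p1 g2p2 cg.
pose alpha x := g1' (c' (g2 x)).
pose t x := g1' (c' (r (c (g1 x)))).
have rt : conj_class r t.
  exists (fun x => g1' (c' x)), (fun x => c (g1 x)).
  by split=> [x|]; [rewrite g1'K c'K | split=> x; rewrite ?cK ?g1K].
have [ti tK _] := is_perm_conj r_perm rt.
have t_graph xy : xy \in undup (p1 ++ pimg alpha p2) -> t xy.1 = xy.2.
  rewrite mem_undup mem_cat => /orP[xy1|/mapP[[a b] ab ->]] /=.
    by rewrite /t -cr cK g1p1 // g1K.
  by rewrite /t /alpha g1'K c'K (g2p2 (a, b) ab).
exists (undup (p1 ++ pimg alpha p2)), alpha; split.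
- split; first exact: is_pinj_graph (can_inj tK) (undup_uniq _) t_graph.
  by exists t; split; [apply: C_rho_conj | apply: t_graph].
- by exists (fun x => g2' (c (g1 x))) => x; rewrite /alpha ?g1'K ?c'K ?g2K ?g2'K ?cK ?g1K.
- by move=> x xA; rewrite /alpha -cg // cK g1K.
- by move=> xy xy1; rewrite mem_undup mem_cat xy1.
- by move=> xy xy2; rewrite mem_undup mem_cat xy2 orbT.
Qed.

Definition base_system r t L (bases : seq (nat * option nat)) := [/\
  forall z l, (z, l) \in bases -> cycle_len t z l,
  (exists z, (z, None) \in bases) -> forall y n, cycle_len r y (Some n) -> n <= L,
  uniq (map fst bases),
  {in map fst bases &, forall z z', same_cycle t z z' -> z = z'} &
  forall z z', (z, None) \in bases -> (z', None) \in bases -> z = z'].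

Section BaseSystem.

Context {r t : nat -> nat} {L : nat} {bases : seq (nat * option nat)}.
Context (r_perm : is_perm r) (rt : conj_class r t) (bases_ok : base_system r t L bases).

Let r_inj : injective r. Proof. by case: r_perm => ri /can_inj. Qed.

Lemma P_rho_base_segments : P_rho r (base_segments t L bases).
Proof.
have [ti tK _] := is_perm_conj r_perm rt.
split; first exact: is_pinj_graph (can_inj tK) (undup_uniq _) (@base_segments_graph t L bases).
by exists t; split; [apply: C_rho_conj | apply: base_segments_graph].
Qed.

Section Embedding.

Variable g : nat -> nat.
Hypotheses (g_inj : injective g) (g_iter : forall z l, (z, l) \in bases ->
  forall j, j <= segment_len L l -> g (iter j t z) = iter j r (g z)).

Lemma embedded_base_len {z l} : (z, l) \in bases -> cycle_len r (g z) l.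
Proof.
have [t_len r_bounded _ _ _] := bases_ok.
move=> zb; have := t_len z l zb; case: l zb => [n|] zb.
  move=> [n_gt0 [fn minn]]; do 2!split=> //; first by rewrite -(g_iter _ _ zb) ?fn.
  by move=> k k_gt0 kn; rewrite -(g_iter _ _ zb) 1?ltnW // => /g_inj; apply: minn.
move=> z_inf k k_gt0 fk; have [[n|] cz] := cycle_len_exists r (g z); last exact: cz k k_gt0 fk.
have [n_gt0 [fn _]] := cz; apply: (z_inf n n_gt0); apply: g_inj.
by rewrite (g_iter _ _ zb) // (r_bounded _ _ _ cz) //; exists z.
Qed.

Lemma embedded_base_sep {z l z' l'} : (z, l) \in bases -> (z', l') \in bases ->
  same_cycle r (g z) (g z') -> z = z'.
Proof.
have [_ _ _ sep inf_uniq] := bases_ok.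
move=> zb z'b gzz'; have cz := embedded_base_len zb; have cz' := embedded_base_len z'b.
have ll' := cycle_len_uniq (same_cycle_cycle_len r_inj gzz' cz) cz'; subst l'.
have [zm z'm] : z \in map fst bases /\ z' \in map fst bases.
  by split; apply/mapP; [exists (z, l) | exists (z', l)].
case: l zb z'b cz cz' => [n|] zb z'b cz cz'; last exact: inf_uniq.
have [j jn fj] := same_cycle_finP r_inj cz gzz'.
apply: sep => //; exists j; left; apply: g_inj.
by rewrite (g_iter _ _ zb) // ltnW.
Qed.

Lemma embedded_bases_marked :
  marked_cycles r [seq g bz.1 | bz <- bases] [seq bz.2 | bz <- bases].
Proof.
have [_ _ uniq_bases _ _] := bases_ok.
have nth_base i : i < size bases ->
    ((nth (0, None) bases i).1, (nth (0, None) bases i).2) \in bases.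
  by move=> i_lt; rewrite -surjective_pairing mem_nth.
split; first by rewrite !size_map.
  move=> i; rewrite size_map => i_lt; rewrite !(nth_map (0, None)) //.
  exact: embedded_base_len (nth_base i i_lt).
move=> i j; rewrite size_map => i_lt j_lt; rewrite !(nth_map (0, None)) // => same.
have /eqP := embedded_base_sep (nth_base i i_lt) (nth_base j j_lt) same.
by rewrite -(nth_map _ 0 fst i_lt) -(nth_map _ 0 fst j_lt) nth_uniq ?size_map // => /eqP.
Qed.

End Embedding.

Lemma base_segments_amalgamation p1 p2 : P_rho r p1 -> P_rho r p2 ->
  pext (base_segments t L bases) p1 -> pext (base_segments t L bases) p2 ->
  exists p3 alpha, [/\ P_rho r p3, is_perm alpha,
    {in pdom (base_segments t L bases) ++ prng (base_segments t L bases), forall x, alpha x = x},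
    pext p1 p3 & pext (pimg alpha p2) p3].
Proof.
move=> /P_rho_embedding[g1 [g1' [g1K g1'K g1p1]]] /P_rho_embedding[g2 [g2' [g2K g2'K g2p2]]].
move=> p0p1 p0p2; have [ri rK riK] := r_perm.
have iter_g (g : nat -> nat) p : embeds r g p -> pext (base_segments t L bases) p ->
    forall z l, (z, l) \in bases -> forall j, j <= segment_len L l ->
    g (iter j t z) = iter j r (g z).
  move=> gp p0p z l zb; apply: embeds_segment_iter gp _.
  by move=> xy /(segment_sub_base_segments zb) /p0p.
have g1_iter := iter_g g1 p1 g1p1 p0p1; have g2_iter := iter_g g2 p2 g2p2 p0p2.
have [c [c' [cK c'K cr c_bases]]] := conj_marked_cycles rK riK rK riK
  (embedded_bases_marked g1 (can_inj g1K) g1_iter) (embedded_bases_marked g2 (can_inj g2K) g2_iter)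
  (fun l k => iff_refl _).
have c_base z l : (z, l) \in bases -> c (g1 z) = g2 z.
  move=> zb; have := c_bases (index (z, l) bases); rewrite size_map index_mem => /(_ zb).
  by rewrite !(nth_map (0, None)) ?index_mem // nth_index.
apply: (amalgamate_embeddings r_perm g1K g1'K g2K g2'K cK c'K cr g1p1 g2p2).
move=> x /mem_base_segments[z [l [j [zb jn ->]]]].
by rewrite (g1_iter _ _ zb j jn) (g2_iter _ _ zb j jn) (iter_morph cr) (c_base z l zb).
Qed.

End BaseSystem.

Lemma conj_resolving_orbits {r t0} (X : seq nat) : is_perm r -> C_rho r t0 ->
  exists t, [/\ conj_class r t, {in X, t =1 t0} &
    (forall x, x \in X -> orbit_finite x t) \/
    finite_cycles_bounded r /\ {in X &, forall x y, joined x y t}].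
Proof.
move=> r_perm Ct0; case: (classic (finite_cycles_bounded r)) => [bounded|unbounded].
  pose XX := [seq (x, y) | x <- X, y <- X].
  have all_joined : dense_open r (fun t => forall xy, xy \in XX -> joined xy.1 xy.2 t).
    by apply: dense_open_all => // xy _; apply: dense_open_joined.
  have [t [rt tt0 [A joinedA]]] := all_joined t0 Ct0 X.
  exists t; split=> //; right; split=> // x y xX yX.
  by apply: (joinedA t (fun _ _ => erefl) (x, y)); apply: allpairs_f.
have all_finite : dense_open r (fun t => forall x, x \in X -> orbit_finite x t).
  by apply: dense_open_all => // x _; apply: dense_open_orbit_finite.
have [t [rt tt0 [A finA]]] := all_finite t0 Ct0 X.
by exists t; split=> //; left; apply: finA.
Qed.

Lemma cycle_reps {t : nat -> nat} (xs : seq nat) : injective t ->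
  exists R : seq nat, [/\ uniq R, {subset R <= xs},
    {in R &, forall x y, same_cycle t x y -> x = y} &
    forall x, x \in xs -> exists2 y, y \in R & same_cycle t y x].
Proof.
move=> t_inj; elim: xs => [|a xs [R [R_uniq Rxs R_sep R_cover]]]; first by exists [::].
case: (classic (exists2 y, y \in R & same_cycle t y a)) => [[y yR ya]|a_new].
  exists R; split=> // [z /Rxs zxs|x]; first by rewrite inE zxs orbT.
  by rewrite inE => /predU1P[->|/R_cover//]; exists y.
have aR : a \notin R by apply/negP => aR; apply: a_new; exists a => //; apply: same_cycle_refl.
exists (a :: R); split.
- by rewrite /= aR.
- by move=> z; rewrite !inE => /predU1P[->|/Rxs->]; rewrite ?eqxx ?orbT.
- move=> x y; rewrite !inE => /predU1P[->|xR] /predU1P[->|yR] // xy.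
  + by case: a_new; exists y => //; apply: same_cycle_sym.
  + by case: a_new; exists x.
  + exact: R_sep.
- move=> x; rewrite inE => /predU1P[->|/R_cover[y yR yx]].
    by exists a; [apply: mem_head | apply: same_cycle_refl].
  by exists y; rewrite // inE yR orbT.
Qed.

Lemma finite_bases {t : nat -> nat} (X : seq nat) : injective t ->
  exists R : seq nat, [/\ uniq R, {in R &, forall x y, same_cycle t x y -> x = y},
    forall z, z \in R -> orbit_finite z t &
    forall x, x \in X -> orbit_finite x t -> exists n z j,
      [/\ z \in R, cycle_length t z = Some n, j < n & iter j t z = x]].
Proof.
move=> t_inj; pose XF := [seq x <- X | pbool (orbit_finite x t)].
have [R [R_uniq RXF R_sep R_cover]] := cycle_reps XF t_inj.
have R_fin z : z \in R -> orbit_finite z t by move/RXF; rewrite mem_filter => /andP[/pboolP].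
exists R; split=> // x xX x_fin.
have [|z zR zx] := R_cover x; first by rewrite mem_filter xX andbT; apply/pboolT.
have [[n|] cz] := cycle_len_exists t z; last by case/orbit_finiteP: (R_fin z zR).
have [j jn fj] := same_cycle_finP t_inj cz zx.
by exists n, z, j; split=> //; apply: cycle_len_uniq (cycle_lengthP t z) cz.
Qed.

Lemma infinite_base r {t : nat -> nat} (X : seq nat) : injective t ->
  (forall x, x \in X -> orbit_finite x t) \/
    finite_cycles_bounded r /\ {in X &, forall x y, joined x y t} ->
  exists (I : seq nat) L, [/\ size I <= 1, forall z, z \in I -> cycle_len t z None,
    I != [::] -> forall y n, cycle_len r y (Some n) -> n <= L &
    forall x, x \in X -> ~ orbit_finite x t -> exists z j, [/\ z \in I, j < L & iter j t z = x]].
Proof.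
move=> t_inj resolved; pose XI := [seq x <- X | ~~ pbool (orbit_finite x t)].
have mem_XI x : x \in XI = (x \in X) && ~~ pbool (orbit_finite x t) by rewrite mem_filter andbC.
have inf_XI x : x \in XI -> cycle_len t x None.
  by rewrite mem_XI => /andP[_ /pboolP fin]; apply: NNPP => /orbit_finiteP.
case XI_eq: XI => [|x0 s].
  exists [::], 0; split=> // x xX not_fin.
  by have := mem_XI x; rewrite XI_eq xX (introF (pboolP _) not_fin).
case: resolved => [all_fin|[[B bounded] joinedX]].
  have := mem_head x0 s; rewrite -XI_eq mem_XI => /andP[x0X /pboolP[]].
  exact: all_fin.
have [|b bXI b_root] := forward_root x0 s t_inj.
  move=> a c; rewrite -XI_eq => aXI cXI; have := aXI; have := cXI; rewrite !mem_XI.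
  move=> /andP[cX /pboolP c_inf] /andP[aX /pboolP a_inf].
  by case: (joinedX a c aX cX).
have [K K_wit] := bounded_witnesses b_root.
exists [:: b], (maxn K B); split=> [|z|_ y n /bounded|x xX not_fin] //.
- by rewrite inE => /eqP->; apply: inf_XI; rewrite XI_eq.
- by move=> nB; rewrite (leq_trans nB) // leq_maxr.
have [|j jK fj] := K_wit x; first by rewrite -XI_eq mem_XI xX; apply/pboolP.
by exists b, j; rewrite mem_head (leq_trans jK) ?leq_maxl.
Qed.

Lemma covering_bases {r} {t : nat -> nat} {X : seq nat} : injective t ->
  (forall x, x \in X -> orbit_finite x t) \/
    finite_cycles_bounded r /\ {in X &, forall x y, joined x y t} ->
  exists L bases, base_system r t L bases /\ forall x, x \in X ->
    exists z l j, [/\ (z, l) \in bases, j < segment_len L l & iter j t z = x].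
Proof.
move=> t_inj resolved.
have [R [R_uniq R_sep R_fin R_cover]] := finite_bases X t_inj.
have [I [L [I_small I_inf I_bound I_cover]]] := infinite_base r X t_inj resolved.
pose bases := [seq (z, cycle_length t z) | z <- R] ++ [seq (z, None) | z <- I].
have mem_bases z l : (z, l) \in bases ->
    z \in R /\ l = cycle_length t z \/ z \in I /\ l = None.
  by rewrite mem_cat => /orP[/mapP[z' zR [-> ->]]|/mapP[z' zI [-> ->]]]; [left|right].
have R_len z : z \in R -> exists n, cycle_length t z = Some n.
  move=> /R_fin /orbit_finiteP fin; case E: (cycle_length t z) => [n|]; first by exists n.
  by case: fin; rewrite -E; apply: cycle_lengthP.
have I_uniq z z' : z \in I -> z' \in I -> z = z'.
  by move: I_small; case: I {I_inf I_bound I_cover bases mem_bases} => [|a [|]] //= _;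
    rewrite !inE => /eqP-> /eqP->.
have R_finite z l : z \in R -> cycle_len t z l -> l <> None.
  by move=> /R_len[n E] cz El; subst l; move: (cycle_lengthP t z); rewrite E => /(cycle_len_uniq cz).
have fst_bases : map fst bases = R ++ I.
  by rewrite map_cat -!map_comp; congr (_ ++ _); [elim: (R) | elim: (I)] => //= a s ->.
exists L, bases; split; last first.
  move=> x xX; case: (classic (orbit_finite x t)) => [fin|not_fin].
    have [n [z [j [zR zn jn fj]]]] := R_cover x xX fin.
    exists z, (Some n), j; split=> //.
    by rewrite /bases mem_cat -zn (map_f (fun z => (z, cycle_length t z))).
  have [z [j [zI jL fj]]] := I_cover x xX not_fin.
  exists z, None, j; split=> //.
  by rewrite /bases mem_cat (map_f (fun z => (z, None))) ?orbT.
split.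
- move=> z l /mem_bases[[_ ->]|[/I_inf ? ->//]]; exact: cycle_lengthP.
- move=> [z /mem_bases[[zR zl]|[zI _]]].
    by case: (R_len z zR) => n; rewrite -zl.
  by apply: I_bound; apply: contraTneq zI => ->.
- rewrite fst_bases cat_uniq R_uniq /=; apply/andP; split.
    apply/hasPn => z zI; apply/negP => zR.
    exact: R_finite zR (I_inf z zI) erefl.
  by move: I_small; case: (I) => [|a [|]].
- rewrite fst_bases => z z'; rewrite !mem_cat => /orP[zR|zI] /orP[z'R|z'I] zz'.
  + exact: R_sep.
  + by case: (R_finite z None zR) => //; apply: (same_cycle_cycle_len t_inj (same_cycle_sym zz')); apply: I_inf.
  + by case: (R_finite z' None z'R) => //; apply: (same_cycle_cycle_len t_inj zz'); apply: I_inf.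
  + exact: I_uniq.
- move=> z z' /mem_bases[[zR zl]|[zI _]]; first by case: (R_len z zR) => n; rewrite -zl.
  move=> /mem_bases[[z'R z'l]|[z'I _]]; first by case: (R_len z' z'R) => n; rewrite -z'l.
  exact: I_uniq.
Qed.

Lemma cofinal_amalgamation_P_rho r : is_perm r -> cofinal_amalgamation (P_rho r).
Proof.
move=> r_perm p0 [_ [t0 [Ct0 t0p0]]].
have [t [rt tt0 resolved]] := conj_resolving_orbits (pdom p0) r_perm Ct0.
have [ti tK _] := is_perm_conj r_perm rt.
have [L [bases [bases_ok cover]]] := covering_bases (can_inj tK) resolved.
exists (base_segments t L bases); split; first exact: P_rho_base_segments r_perm rt.
split.
  move=> [a b] ab; have aX : a \in pdom p0 by apply/mapP; exists (a, b).
  have [z [l [j [zb jl fj]]]] := cover a aX.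
  apply: (segment_sub_base_segments zb); apply/mapP; exists j; first by rewrite mem_iota.
  by rewrite -[b](t0p0 _ ab) /= -tt0 // -fj.
move=> p1 p2 P1 P2 p0p1 p0p2.
have [p3 [alpha [P3 alpha_perm alpha_id p1p3 p2p3]]] :=
  base_segments_amalgamation r_perm bases_ok p1 p2 P1 P2 p0p1 p0p2.
by exists p3, alpha.
Qed.

Theorem proposition1p4 (rho : nat -> nat) (Hrho : is_perm rho) :
  cofinal_amalgamation (P_rho rho) /\
  (exists gamma, generic rho gamma) /\
  (forall gamma, generic rho gamma ->
     (forall n, 0 < n -> cycle_fun rho (Some n) = cycle_fun gamma (Some n)) /\
     (~ finite_cycles_bounded rho -> cycle_fun gamma None = Some 0) /\
     (finite_cycles_bounded rho -> cycle_fun rho None <> Some 0 ->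
        cycle_fun gamma None = Some 1) /\
     (cycle_fun rho None = Some 0 -> cycle_fun gamma None = Some 0)).
Proof.
split; first exact: cofinal_amalgamation_P_rho.
split.
  have [t [Ct not_atypical]] := meagre_avoid Hrho (typical_comeagre rho Hrho).
  by exists t; apply: typical_generic => //; apply: NNPP => atypical; apply: not_atypical.
by move=> gamma /(generic_cycle_fun Hrho) [].
Qed.
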